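(* Let $n\ge 2$ and let $f:\mathbb{R}^n\to\mathbb{R}$, $f(x)=\sum_{r,q=1}^n a_{rq}x_rx_q^2$ with $a_{rq}=1$ if $r\ge q$ and $a_{rq}=0$ if $r<q$. Let $M=\mathrm{graph}(f)\subset\mathbb{R}^{n+1}$ with induced metric $g$, $p$ the origin, and let $g(t)$, $t\in[0,T)$, be a smooth solution of the Ricci flow $\partial_t g=-2\,\mathrm{Ric}(g)$ on a neighborhood of $p$ in $M$ with $g(0)=g$. Then at $(t,x)=(0,p)$: $g_{ij}=\delta_{ij}$, $Rm=0$, $\partial_t R_{ijkl}=0$ whenever $\{i,j\}\ne\{k,l\}$, and for $1\le i<j\le n$, $$\partial_t R_{ijij}(0,p)=-8\,(n-j+2)<0 .$$ In particular $\partial_t Rm(0,p)\neq 0$.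
   Context: $M$ is identified with $\mathbb{R}^n$ via $x\mapsto (x,f(x))$, giving global coordinates $x_1,\dots,x_n$ on $M$; components of tensors are taken with respect to the coordinate fields $\partial_i$. The curvature tensor convention is the one for which the Gauss equation of the graph reads $R_{ijkl}=h_{il}h_{jk}-h_{ik}h_{jl}$, where $h_{ij}=\partial_i\partial_j f/\sqrt{1+|\nabla f|^2}$ is the second fundamental form; equivalently, for $g$-orthonormal $e_i,e_j$ the sectional curvature of their span is $R_{ijji}$. *)

From Stdlib Require Import Reals ClassicalEpsilon Arith.
Open Scope R_scope.

Fixpoint Rsum (n : nat) (f : nat -> R) : R :=
  match n with O => 0 | S m => Rsum m f + f m end.

Definition kron (i j : nat) : R := if Nat.eqb i j then 1 else 0.

(* points of R^n are represented as x : nat -> R, coordinates x 0 .. x (n-1)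
   (0-based; coordinate x_{r} of the paper is x (r-1)). *)
Definition upd (x : nat -> R) (k : nat) (s : R) : nat -> R :=
  fun m => if Nat.eqb m k then s else x m.

(* phi has derivative l at s0 within the set A (one-sided at boundary points) *)
Definition deriv_within (phi : R -> R) (A : R -> Prop) (s0 l : R) : Prop :=
  limit1_in (fun s => (phi s - phi s0) / (s - s0)) (fun s => A s /\ s <> s0) l s0.

Definition pdx (f : (nat -> R) -> R) (k : nat) (x : nat -> R) : R :=
  epsilon (inhabits 0) (deriv_within (fun s => f (upd x k s)) (fun _ => True) (x k)).

Definition f_ex (n : nat) (x : nat -> R) : R :=
  Rsum n (fun r => Rsum n (fun q => (if Nat.leb q r then 1 else 0) * x r * (x q)^2)).

(* metric induced on graph(f) in the coordinates x: pullback of the Euclidean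
   metric by x |-> (x, f x), i.e. g_ij = delta_ij + d_i f d_j f *)
Definition graph_metric (f : (nat -> R) -> R) (x : nat -> R) (i j : nat) : R :=
  kron i j + pdx f i x * pdx f j x.

Inductive dir := Dt | Dx (k : nat).
Definition dir_ok (n : nat) (d : dir) : Prop :=
  match d with Dt => True | Dx k => (k < n)%nat end.

Definition has_pd (D : R -> (nat -> R) -> Prop) (d : dir) (F : R -> (nat -> R) -> R)
  (t : R) (x : nat -> R) (l : R) : Prop :=
  match d with
  | Dt => deriv_within (fun s => F s x) (fun s => D s x) t l
  | Dx k => deriv_within (fun s => F t (upd x k s)) (fun s => D t (upd x k s)) (x k) l
  end.

Definition pd (D : R -> (nat -> R) -> Prop) (d : dir) (F : R -> (nat -> R) -> R)
  (t : R) (x : nat -> R) : R :=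
  epsilon (inhabits 0) (has_pd D d F t x).

Definition cont_on (n : nat) (D : R -> (nat -> R) -> Prop) (F : R -> (nat -> R) -> R) : Prop :=
  forall t x, D t x -> forall e, 0 < e -> exists del, 0 < del /\
    forall t' x', D t' x' -> Rabs (t' - t) < del ->
      (forall k, (k < n)%nat -> Rabs (x' k - x k) < del) ->
      Rabs (F t' x' - F t x) < e.

(* C^infinity on D: F lies in a family of continuous functions closed under
   all partial derivatives (so every iterated partial derivative exists on D
   and is continuous) *)
Definition smooth_on (n : nat) (D : R -> (nat -> R) -> Prop) (F : R -> (nat -> R) -> R) : Prop :=
  exists S : (R -> (nat -> R) -> R) -> Prop, S F /\
    forall G, S G -> cont_on n D G /\
      forall d, dir_ok n d -> exists G', S G' /\
        forall t x, D t x -> has_pd D d G t x (G' t x).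

Definition minv (n : nat) (A : nat -> nat -> R) : nat -> nat -> R :=
  epsilon (inhabits (fun _ _ => 0))
    (fun B => forall i j, (i < n)%nat -> (j < n)%nat ->
       Rsum n (fun k => B i k * A k j) = kron i j).

Section Curv.
Variables (n : nat) (g gi : nat -> nat -> R) (dg : nat -> nat -> nat -> R)
          (ddg : nat -> nat -> nat -> nat -> R).
(* dg a b c = d_a g_bc ;  ddg a b c d = d_a d_b g_cd ; gi = g^{-1} *)
(* d_a g^{ml} = - g^{mp} d_a g_pq g^{ql} *)
Definition dgi (a m l : nat) : R :=
  - Rsum n (fun p => Rsum n (fun q => gi m p * dg a p q * gi q l)).
Definition Gam (m j k : nat) : R :=
  / 2 * Rsum n (fun l => gi m l * (dg j k l + dg k j l - dg l j k)).
Definition dGam (i m j k : nat) : R :=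
  / 2 * Rsum n (fun l => dgi i m l * (dg j k l + dg k j l - dg l j k)
                        + gi m l * (ddg i j k l + ddg i k j l - ddg i l j k)).
(* coefficient of d_m in R(d_i,d_j)d_k, R(X,Y)Z = nabla_X nabla_Y Z - nabla_Y nabla_X Z - nabla_[X,Y] Z *)
Definition Rup (i j k m : nat) : R :=
  dGam i m j k - dGam j m i k
  + Rsum n (fun p => Gam p j k * Gam m i p - Gam p i k * Gam m j p).
(* R_ijkl = g(R(d_i,d_j)d_k, d_l); sectional curvature of orthonormal e_i,e_j is R_ijji *)
Definition Riem (i j k l : nat) : R := Rsum n (fun m => Rup i j k m * g m l).
Definition Ric (j k : nat) : R := Rsum n (fun i => Rup i j k i).
End Curv.

Definition dgF (D : R -> (nat -> R) -> Prop) (G : R -> (nat -> R) -> nat -> nat -> R)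
  (t : R) (x : nat -> R) (a b c : nat) : R :=
  pd D (Dx a) (fun t x => G t x b c) t x.
Definition ddgF (D : R -> (nat -> R) -> Prop) (G : R -> (nat -> R) -> nat -> nat -> R)
  (t : R) (x : nat -> R) (a b c d : nat) : R :=
  pd D (Dx a) (fun t x => pd D (Dx b) (fun t x => G t x c d) t x) t x.

Definition RmF (n : nat) (D : R -> (nat -> R) -> Prop) (G : R -> (nat -> R) -> nat -> nat -> R)
  (t : R) (x : nat -> R) (i j k l : nat) : R :=
  Riem n (G t x) (minv n (G t x)) (dgF D G t x) (ddgF D G t x) i j k l.
Definition RicF (n : nat) (D : R -> (nat -> R) -> Prop) (G : R -> (nat -> R) -> nat -> nat -> R)
  (t : R) (x : nat -> R) (j k : nat) : R :=
  Ric n (minv n (G t x)) (dgF D G t x) (ddgF D G t x) j k.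

(* the spacetime domain [0,T) x (-eps,eps)^n (coordinates beyond n are 0) *)
Definition dom (n : nat) (T eps : R) (t : R) (x : nat -> R) : Prop :=
  0 <= t < T /\ (forall k, (k < n)%nat -> Rabs (x k) < eps) /\
  (forall k, (n <= k)%nat -> x k = 0).

Definition origin : nat -> R := fun _ => 0.

Definition is_ricci_flow (n : nat) (D : R -> (nat -> R) -> Prop)
  (G : R -> (nat -> R) -> nat -> nat -> R) : Prop :=
  (forall i j, (i < n)%nat -> (j < n)%nat -> smooth_on n D (fun t x => G t x i j)) /\
  (forall t x, D t x -> forall i j, (i < n)%nat -> (j < n)%nat -> G t x i j = G t x j i) /\
  (forall t x, D t x -> forall v : nat -> R, (exists k, (k < n)%nat /\ v k <> 0) ->
      0 < Rsum n (fun i => Rsum n (fun j => G t x i j * v i * v j))) /\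
  (forall t x, D t x -> forall i j, (i < n)%nat -> (j < n)%nat ->
      has_pd D Dt (fun t x => G t x i j) t x (-2 * RicF n D G t x i j)).

From Stdlib Require Import Reals Lia Lra Psatz.
From Stdlib Require Import ClassicalEpsilon FunctionalExtensionality PropExtensionality.
From mathcomp Require all_boot all_algebra Rstruct.
Open Scope R_scope.

(* At [t = 0] the metric is [g = I + df df^T] with [f] cubic, so near [p] one has
   [g - I = O(|x|^4)], [dg = O(|x|^3)] and [ddg = O(|x|^2)].  Hence [g = I] and [Rm = 0] at [p],
   since every term of the curvature is linear in [ddg] or quadratic in [dg]; for the same reason
   [d_t Rm (0, p)] is the curvature linearised at the Euclidean metric, applied to [d_t ddg (0, p)].
   Mixed partials commute, so [d_t ddg = dd (d_t g) = -2 dd Ric], and up to [O(|x|^6)] the Ricci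
   tensor at [t = 0] is its Gauss-equation main term [sum_i (f_ii f_jk - f_ij f_ik)], a quadratic
   form in [x] whose Hessian is a sum of products of the constant third derivatives of [f].
   Evaluating that sum gives [d_t R_ijij = -8 (n - j + 1)] for [i < j] (with 0-based [j]) and
   [d_t R_ijkl = 0] when [{i, j} <> {k, l}]. *)

(** * Finite sums *)

Lemma Rsum_ext n f g : (forall i, (i < n)%nat -> f i = g i) -> Rsum n f = Rsum n g.
Proof.
  induction n as [|n IH]; intros H; simpl; auto.
  rewrite IH by (intros; apply H; lia). rewrite H by lia. reflexivity.
Qed.

Lemma Rsum_plus n f g : Rsum n (fun i => f i + g i) = Rsum n f + Rsum n g.
Proof. induction n; simpl; [lra | rewrite IHn; lra]. Qed.

Lemma Rsum_minus n f g : Rsum n (fun i => f i - g i) = Rsum n f - Rsum n g.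
Proof. induction n; simpl; [lra | rewrite IHn; lra]. Qed.

Lemma Rsum_scal_l n c f : Rsum n (fun i => c * f i) = c * Rsum n f.
Proof. induction n; simpl; [lra | rewrite IHn; lra]. Qed.

Lemma Rsum_scal_r n c f : Rsum n (fun i => f i * c) = Rsum n f * c.
Proof. induction n; simpl; [lra | rewrite IHn; lra]. Qed.

Lemma Rsum_const n c : Rsum n (fun _ => c) = INR n * c.
Proof. induction n; simpl Rsum; [simpl; lra | rewrite IHn, S_INR; ring]. Qed.

Lemma Rsum_eq_0 n f : (forall i, (i < n)%nat -> f i = 0) -> Rsum n f = 0.
Proof. intros H. rewrite (Rsum_ext n f (fun _ => 0)), Rsum_const by auto. ring. Qed.

Lemma Rsum_swap n m (f : nat -> nat -> R) :
  Rsum n (fun i => Rsum m (fun j => f i j)) = Rsum m (fun j => Rsum n (fun i => f i j)).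
Proof.
  induction n; simpl.
  - rewrite Rsum_eq_0; auto.
  - rewrite IHn, <- Rsum_plus. reflexivity.
Qed.

Lemma Rsum_le n f g : (forall i, (i < n)%nat -> f i <= g i) -> Rsum n f <= Rsum n g.
Proof.
  induction n; intros H; simpl; [lra|].
  assert (f n <= g n) by (apply H; lia).
  assert (Rsum n f <= Rsum n g) by (apply IHn; intros; apply H; lia). lra.
Qed.

Lemma Rsum_nonneg n f : (forall i, (i < n)%nat -> 0 <= f i) -> 0 <= Rsum n f.
Proof. intros H. rewrite <- (Rsum_eq_0 n (fun _ => 0)) by auto. now apply Rsum_le. Qed.

Lemma Rsum_Rabs n f : Rabs (Rsum n f) <= Rsum n (fun i => Rabs (f i)).
Proof.
  induction n; simpl; [rewrite Rabs_R0; lra|].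
  eapply Rle_trans; [apply Rabs_triang | lra].
Qed.

Lemma Rsum_Rabs_le n f B : (forall i, (i < n)%nat -> Rabs (f i) <= B) -> Rabs (Rsum n f) <= INR n * B.
Proof.
  intros H. eapply Rle_trans; [apply Rsum_Rabs|].
  rewrite <- Rsum_const. apply Rsum_le. exact H.
Qed.

Lemma kron_sym i j : kron i j = kron j i.
Proof. unfold kron. now rewrite Nat.eqb_sym. Qed.

Lemma kron_diag i : kron i i = 1.
Proof. unfold kron. now rewrite Nat.eqb_refl. Qed.

Lemma kron_neq i j : i <> j -> kron i j = 0.
Proof. intros. unfold kron. destruct (Nat.eqb_spec i j); [lia | auto]. Qed.

Lemma Rabs_kron_le i j : Rabs (kron i j) <= 1.
Proof. unfold kron. destruct Nat.eqb; rewrite ?Rabs_R1, ?Rabs_R0; lra. Qed.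

Lemma Rsum_kron_l n k f : (k < n)%nat -> Rsum n (fun i => kron i k * f i) = f k.
Proof.
  induction n; intros Hk; [lia | simpl].
  destruct (Nat.eq_dec k n) as [->|ne].
  - rewrite Rsum_eq_0, kron_diag; [ring|]. intros i Hi. rewrite kron_neq by lia. ring.
  - rewrite IHn, kron_neq by lia. ring.
Qed.

Lemma Rsum_kron_r n k f : (k < n)%nat -> Rsum n (fun i => kron k i * f i) = f k.
Proof.
  intros Hk. rewrite <- (Rsum_kron_l n k f Hk). apply Rsum_ext. intros. now rewrite kron_sym.
Qed.

Lemma Rabs_mult_le a b A B : Rabs a <= A -> Rabs b <= B -> Rabs (a * b) <= A * B.
Proof. intros. rewrite Rabs_mult. apply Rmult_le_compat; auto; apply Rabs_pos. Qed.

Lemma Rabs_plus_le a b A B : Rabs a <= A -> Rabs b <= B -> Rabs (a + b) <= A + B.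
Proof. intros. eapply Rle_trans; [apply Rabs_triang | lra]. Qed.

Lemma Rabs_minus_le a b A B : Rabs a <= A -> Rabs b <= B -> Rabs (a - b) <= A + B.
Proof. intros. eapply Rle_trans; [apply Rabs_triang | rewrite Rabs_Ropp; lra]. Qed.

Lemma eq_of_close a b : (forall e, 0 < e -> Rabs (a - b) < 2 * e) -> a = b.
Proof.
  intros H. destruct (Req_dec (a - b) 0); [lra|].
  pose proof (Rabs_pos_lt _ H0). specialize (H (Rabs (a - b) / 4)). lra.
Qed.

Lemma exists_delta_forall n (Q : nat -> R -> Prop) :
  (forall i d d', Q i d -> 0 < d' <= d -> Q i d') ->
  (forall i, (i < n)%nat -> exists d, 0 < d /\ Q i d) ->
  exists d, 0 < d /\ forall i, (i < n)%nat -> Q i d.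
Proof.
  intros Hmon. induction n as [|n IH]; intros H.
  - exists 1. split; [lra | intros; lia].
  - destruct IH as [d1 [Hd1 H1]]; [intros; apply H; lia|].
    destruct (H n (Nat.lt_succ_diag_r n)) as [d2 [Hd2 H2]].
    pose proof (Rmin_l d1 d2). pose proof (Rmin_r d1 d2).
    assert (0 < Rmin d1 d2) by (apply Rmin_pos; auto).
    exists (Rmin d1 d2). split; auto. intros i Hi.
    destruct (Nat.eq_dec i n) as [->|].
    + apply (Hmon n d2); auto; lra.
    + apply (Hmon i d1); [apply H1; lia | lra].
Qed.

(** * Matrices close to the identity *)

Module MatrixInverse.
Import all_boot all_algebra Rstruct GRing.Theory.
Local Open Scope ring_scope.

Lemma Rsum_bigop n (F : nat -> R) : Rsum n F = \sum_(i < n) F i.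
Proof.
elim: n => [|n IH]; first by rewrite big_ord0.
by rewrite big_ord_recr /= IH.
Qed.

Definition extend {n} (f : 'I_n -> R) (i : nat) : R := oapp f 0 (insub i).

Lemma extendE {n} f (k : 'I_n) : extend f k = f k.
Proof. by rewrite /extend valK. Qed.

Local Open Scope R_scope.

Lemma left_inverse_exists (n : nat) (A : nat -> nat -> R) :
  (forall v : nat -> R,
     (forall j, (j < n)%coq_nat -> Rsum n (fun i => v i * A i j) = 0) ->
     forall i, (i < n)%coq_nat -> v i = 0) ->
  exists B : nat -> nat -> R, forall i j, (i < n)%coq_nat -> (j < n)%coq_nat ->
     Rsum n (fun k => B i k * A k j) = kron i j.
Proof.
move=> Hker.
pose M : 'M[R]_n := \matrix_(i < n, j < n) A i j.
have uM : M \in unitmx.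
  rewrite unitmxE unitfE; apply/negP => /det0P [v nz vM].
  pose w := extend (fun k => v ord0 k).
  have Hw : forall i, (i < n)%coq_nat -> w i = 0.
    apply: Hker => j /ltP jn.
    rewrite Rsum_bigop.
    have := congr1 (fun X : 'M_(1,n) => X ord0 (Ordinal jn)) vM.
    rewrite !mxE => H; rewrite -[X in _ = X]H.
    by apply: eq_bigr => i _; rewrite /w extendE mxE.
  move/eqP: nz; apply; apply/rowP => k; rewrite mxE.
  by have := Hw k (elimT ltP (ltn_ord k)); rewrite /w extendE.
exists (fun i k => extend (fun i' => extend (fun k' => invmx M i' k') k) i).
move=> i j /ltP iN /ltP jN.
rewrite Rsum_bigop.
have := congr1 (fun X : 'M_n => X (Ordinal iN) (Ordinal jN)) (mulVmx uM).
rewrite !mxE => H.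
have -> : kron i j = (Ordinal iN == Ordinal jN)%:R.
  rewrite -[Ordinal iN == _]/(i == j) /kron.
  by case: (Nat.eqb_spec i j) => [->|ne]; [rewrite eqxx | case: eqP].
rewrite -H; apply: eq_bigr => k _.
by rewrite (extendE _ (Ordinal iN)) extendE mxE.
Qed.

End MatrixInverse.

Definition near_identity (n : nat) (A : nat -> nat -> R) (al : R) : Prop :=
  forall i j, (i < n)%nat -> (j < n)%nat -> Rabs (A i j - kron i j) <= al.

Section NearIdentity.
Variables (n : nat) (A : nat -> nat -> R) (al : R).
Hypotheses (Hal : 0 <= al) (Hsmall : INR n * al <= 1 / 2) (HA : near_identity n A al).

(* Writing [v = v (I - A)] for [v A = 0] bounds each [|v j|] by [al] times the l1-norm [S]
   of [v], so [S <= n al S <= S / 2]; the row estimates of [minv_near_identity] apply the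
   same trick to [B - kron = B (I - A)]. *)
Lemma near_identity_left_kernel v :
  (forall j, (j < n)%nat -> Rsum n (fun i => v i * A i j) = 0) ->
  forall i, (i < n)%nat -> v i = 0.
Proof.
  intros Hv. set (S := Rsum n (fun i => Rabs (v i))).
  assert (Hj : forall j, (j < n)%nat -> Rabs (v j) <= al * S).
  { intros j Hjn.
    assert (E : v j = Rsum n (fun i => v i * (kron i j - A i j))).
    { rewrite (Rsum_ext n _ (fun i => kron i j * v i - v i * A i j)) by (intros; ring).
      rewrite Rsum_minus, Rsum_kron_l, Hv by auto. ring. }
    rewrite E. eapply Rle_trans; [apply Rsum_Rabs|]. unfold S. rewrite <- Rsum_scal_l.
    apply Rsum_le. intros i Hi. rewrite Rabs_mult, Rmult_comm.
    apply Rmult_le_compat_r; [apply Rabs_pos|]. rewrite Rabs_minus_sym. auto. }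
  assert (HS : S <= INR n * (al * S)) by (unfold S at 1; rewrite <- Rsum_const; apply Rsum_le; auto).
  assert (S0 : 0 <= S) by (apply Rsum_nonneg; intros; apply Rabs_pos).
  assert (S = 0) by nra.
  intros i Hi. specialize (Hj i Hi). rewrite H, Rmult_0_r in Hj.
  destruct (Req_dec (v i) 0) as [|E0]; auto. pose proof (Rabs_pos_lt _ E0). lra.
Qed.

Lemma minv_near_identity_inverse i j : (i < n)%nat -> (j < n)%nat ->
  Rsum n (fun k => minv n A i k * A k j) = kron i j.
Proof.
  revert i j. unfold minv.
  apply epsilon_spec with (P := fun B => forall i j, (i < n)%nat -> (j < n)%nat ->
    Rsum n (fun k => B i k * A k j) = kron i j).
  apply MatrixInverse.left_inverse_exists. exact near_identity_left_kernel.
Qed.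

Lemma minv_near_identity : near_identity n (minv n A) (2 * al).
Proof.
  set (B := minv n A).
  assert (Hrow : forall i j, (i < n)%nat -> (j < n)%nat ->
            Rabs (B i j - kron i j) <= al * Rsum n (fun k => Rabs (B i k))).
  { intros i j Hi Hj.
    replace (B i j - kron i j) with (Rsum n (fun k => B i k * (kron k j - A k j))).
    2:{ rewrite (Rsum_ext n _ (fun k => kron k j * B i k - B i k * A k j)) by (intros; ring).
        rewrite Rsum_minus, Rsum_kron_l, minv_near_identity_inverse; auto. }
    eapply Rle_trans; [apply Rsum_Rabs|]. rewrite <- Rsum_scal_l.
    apply Rsum_le. intros k Hk. rewrite Rabs_mult, Rmult_comm.
    apply Rmult_le_compat_r; [apply Rabs_pos|]. rewrite Rabs_minus_sym. auto. }
  intros i j Hi Hj. set (S := Rsum n (fun k => Rabs (B i k))).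
  assert (HS : S <= 1 + INR n * (al * S)).
  { replace 1 with (Rsum n (fun k => Rabs (kron i k))).
    2:{ rewrite (Rsum_ext n _ (fun k => kron k i * 1)), Rsum_kron_l; auto.
        intros k Hk. rewrite kron_sym. unfold kron.
        destruct Nat.eqb; rewrite ?Rabs_R1, ?Rabs_R0; lra. }
    rewrite <- Rsum_const, <- Rsum_plus. apply Rsum_le. intros k Hk.
    pose proof (Hrow i k Hi Hk). pose proof (Rabs_triang_inv (B i k) (kron i k)).
    fold S in H. lra. }
  assert (0 <= S) by (apply Rsum_nonneg; intros; apply Rabs_pos).
  pose proof (Hrow i j Hi Hj). fold S in H0. nra.
Qed.

End NearIdentity.

(** * Derivatives within a set and partial derivatives on the domain *)

Lemma deriv_within_of_derivable_pt_lim phi A s0 l :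
  derivable_pt_lim phi s0 l -> deriv_within phi A s0 l.
Proof.
  intros H e He. destruct (H e He) as [d Hd]. exists d. split; [apply cond_pos|].
  intros s [[_ Hs] Hds]. simpl in *. unfold R_dist in *.
  specialize (Hd (s - s0)). replace (s0 + (s - s0)) with s in Hd by ring.
  apply Hd; lra.
Qed.

Lemma derivable_pt_lim_of_deriv_within phi A s0 l r : 0 < r ->
  (forall s, Rabs (s - s0) < r -> A s) ->
  deriv_within phi A s0 l -> derivable_pt_lim phi s0 l.
Proof.
  intros Hr HA H e He. destruct (H e He) as [d [Hd Hd']].
  assert (Hm : 0 < Rmin d r) by (apply Rmin_pos; auto).
  pose proof (Rmin_l d r). pose proof (Rmin_r d r).
  exists (mkposreal _ Hm). intros h Hh Hhr. simpl in Hhr.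
  specialize (Hd' (s0 + h)). simpl in Hd'. unfold R_dist in Hd'.
  replace (s0 + h - s0) with h in Hd' by ring.
  apply Hd'. repeat split; [apply HA; replace (s0 + h - s0) with h by ring | |]; lra.
Qed.

Lemma deriv_within_unique phi A s0 l1 l2 :
  (forall d, 0 < d -> exists s, A s /\ s <> s0 /\ Rabs (s - s0) < d) ->
  deriv_within phi A s0 l1 -> deriv_within phi A s0 l2 -> l1 = l2.
Proof.
  intros Hadh. apply single_limit.
  intros a Ha. destruct (Hadh a Ha) as [s [As [ns Hs]]]. exists s. repeat split; auto.
Qed.

Lemma deriv_within_ext phi psi A s0 l : A s0 -> (forall s, A s -> phi s = psi s) ->
  deriv_within phi A s0 l -> deriv_within psi A s0 l.
Proof.
  intros As0 E. apply limit1_ext. intros s [As _]. rewrite !E; auto.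
Qed.

Lemma derivable_pt_lim_val f x l l' : derivable_pt_lim f x l -> l = l' ->
  derivable_pt_lim f x l'.
Proof. now intros H <-. Qed.

Lemma upd_same x k : upd x k (x k) = x.
Proof.
  apply functional_extensionality. intros m. unfold upd.
  destruct (Nat.eqb_spec m k); subst; auto.
Qed.

Lemma upd_upd x k a b : upd (upd x k a) k b = upd x k b.
Proof. apply functional_extensionality. intros m. unfold upd. destruct Nat.eqb; auto. Qed.

Lemma upd_eq x k s : upd x k s k = s.
Proof. unfold upd. now rewrite Nat.eqb_refl. Qed.

Lemma derivable_pt_lim_upd x k m : derivable_pt_lim (fun s => upd x k s m) (x k) (kron m k).
Proof.
  unfold upd, kron. destruct Nat.eqb.
  - apply derivable_pt_lim_id.
  - apply derivable_pt_lim_const.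
Qed.

Lemma derivable_pt_lim_Rsum N (phi : nat -> R -> R) l s0 :
  (forall i, (i < N)%nat -> derivable_pt_lim (phi i) s0 (l i)) ->
  derivable_pt_lim (fun s => Rsum N (fun i => phi i s)) s0 (Rsum N l).
Proof.
  induction N; intros H; simpl; [apply derivable_pt_lim_const|].
  apply derivable_pt_lim_plus; [apply IHN; intros; apply H | apply H]; lia.
Qed.

Section Domain.
Variables (n : nat) (T eps : R).
Notation D := (dom n T eps).

Lemma dom_upd t x k s : D t x -> (k < n)%nat -> Rabs s < eps -> D t (upd x k s).
Proof.
  intros [Ht [Hx Hz]] Hk Hs. split; auto. split; intros m Hm; unfold upd;
  destruct (Nat.eqb_spec m k); auto; lia.
Qed.

Lemma dom_time t s x : D t x -> 0 <= s < T -> D s x.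
Proof. intros [_ H] Hs. split; auto. Qed.

Lemma dom_origin : 0 < T -> 0 < eps -> D 0 origin.
Proof.
  intros hT heps. split; [lra|]. split; intros; unfold origin; [rewrite Rabs_R0; lra | reflexivity].
Qed.

Lemma has_pd_unique d F t x l1 l2 : D t x -> dir_ok n d ->
  has_pd D d F t x l1 -> has_pd D d F t x l2 -> l1 = l2.
Proof.
  intros Hx Hd. pose proof Hx as [Ht [Hb Hz]].
  destruct d as [|k]; simpl; apply deriv_within_unique; intros de Hde.
  - set (h := Rmin de (T - t) / 2).
    assert (0 < Rmin de (T - t)) by (apply Rmin_pos; lra).
    pose proof (Rmin_l de (T - t)). pose proof (Rmin_r de (T - t)).
    exists (t + h). split; [apply (dom_time t); auto; unfold h; lra|].
    split; [unfold h; lra|]. rewrite Rabs_right; unfold h; lra.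
  - pose proof (Hb k Hd) as Hk. set (c := x k) in *.
    set (h := Rmin de (eps - Rabs c) / 2).
    assert (0 < Rmin de (eps - Rabs c)) by (apply Rmin_pos; lra).
    pose proof (Rmin_l de (eps - Rabs c)). pose proof (Rmin_r de (eps - Rabs c)).
    exists (if Rle_dec 0 c then c - h else c + h).
    destruct (Rle_dec 0 c); (split; [apply dom_upd; auto|]);
      unfold h, Rabs in *; repeat destruct Rcase_abs; repeat split; lra.
Qed.

Lemma pd_eq d F t x l : D t x -> dir_ok n d -> has_pd D d F t x l -> pd D d F t x = l.
Proof.
  intros Hx Hd H. unfold pd. eapply has_pd_unique; eauto.
  apply epsilon_spec. exists l; auto.
Qed.

Lemma has_pd_ext d F F' t x l : D t x -> (forall t' x', D t' x' -> F t' x' = F' t' x') ->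
  has_pd D d F t x l -> has_pd D d F' t x l.
Proof.
  intros Hx E. destruct d as [|k]; simpl; apply deriv_within_ext; auto.
  now rewrite upd_same.
Qed.

Lemma pd_ext d F F' t x : D t x -> (forall t' x', D t' x' -> F t' x' = F' t' x') ->
  pd D d F t x = pd D d F' t x.
Proof.
  intros Hx E. unfold pd. f_equal. apply functional_extensionality. intros l.
  apply propositional_extensionality. split; apply has_pd_ext; auto.
  intros; symmetry; auto.
Qed.

Lemma smooth_on_ext F F' : (forall t x, D t x -> F t x = F' t x) ->
  smooth_on n D F -> smooth_on n D F'.
Proof.
  intros E [S [SF HS]].
  exists (fun G => exists G0, S G0 /\ forall t x, D t x -> G t x = G0 t x). split.
  - exists F. split; auto. intros; symmetry; auto.
  - intros G [G0 [SG0 EG]]. destruct (HS G0 SG0) as [C Dd]. split.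
    + intros t x Hx e He. destruct (C t x Hx e He) as [de [Hde Hc]].
      exists de. split; auto. intros. rewrite !EG; auto.
    + intros d Hd. destruct (Dd d Hd) as [G' [SG' HG']]. exists G'. split.
      * exists G'. split; auto.
      * intros t x Hx. eapply has_pd_ext; [auto| |apply HG'; auto]. intros; symmetry; auto.
Qed.

Lemma smooth_on_cont F : smooth_on n D F -> cont_on n D F.
Proof. intros [S [SF HS]]. apply (HS F SF). Qed.

Lemma smooth_on_pd F d : smooth_on n D F -> dir_ok n d ->
  smooth_on n D (pd D d F) /\ forall t x, D t x -> has_pd D d F t x (pd D d F t x).
Proof.
  intros [S [SF HS]] Hd. destruct (HS F SF) as [_ Dd].
  destruct (Dd d Hd) as [G' [SG' HG']].
  assert (E : forall t x, D t x -> pd D d F t x = G' t x) by (intros; apply pd_eq; auto).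
  split.
  - apply smooth_on_ext with G'; [intros; symmetry; auto | exists S; auto].
  - intros t x Hx. rewrite E; auto.
Qed.

Lemma derivable_pt_lim_of_has_pd_x k F t x l : D t x -> (k < n)%nat ->
  has_pd D (Dx k) F t x l -> derivable_pt_lim (fun s => F t (upd x k s)) (x k) l.
Proof.
  intros Hx Hk. pose proof Hx as [Ht [Hb Hz]]. pose proof (Hb k Hk).
  apply derivable_pt_lim_of_deriv_within with (r := eps - Rabs (x k)); [lra|].
  intros s Hs. apply dom_upd; auto.
  pose proof (Rabs_triang_inv s (x k)). lra.
Qed.

Lemma derivable_pt_lim_of_has_pd_t F t x l : D t x -> 0 < t ->
  has_pd D Dt F t x l -> derivable_pt_lim (fun s => F s x) t l.
Proof.
  intros Hx Ht. pose proof Hx as [Ht' _].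
  pose proof (Rmin_l t (T - t)). pose proof (Rmin_r t (T - t)).
  apply derivable_pt_lim_of_deriv_within with (r := Rmin t (T - t)); [apply Rmin_pos; lra|].
  intros s Hs. apply (dom_time t); auto.
  unfold Rabs in Hs; destruct Rcase_abs in Hs; lra.
Qed.

End Domain.

(** * Second differences and mixed partial derivatives *)

Definition second_difference (Phi : R -> R -> R) (s : R) : R :=
  Phi s s - Phi s 0 - Phi 0 s + Phi 0 0.

Lemma second_difference_swap Phi s :
  second_difference (fun w u => Phi u w) s = second_difference Phi s.
Proof. unfold second_difference. ring. Qed.

Lemma Rabs_second_difference_le Phi B s :
  (forall u w, 0 <= u <= s -> 0 <= w <= s -> Rabs (Phi u w) <= B) -> 0 <= s ->
  Rabs (second_difference Phi s) <= 4 * B.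
Proof.
  intros H Hs. unfold second_difference. replace (4 * B) with (B + B + B + B) by ring.
  apply Rabs_plus_le; [apply Rabs_minus_le; [apply Rabs_minus_le|]|]; apply H; lra.
Qed.

Lemma adhDa_pos : adhDa (fun s => 0 < s) 0.
Proof.
  intros a Ha. exists (a / 2). split; [lra|].
  unfold Rdist. rewrite Rminus_0_r, Rabs_right; lra.
Qed.

Section SecondDifference.
Variables (Phi Phi_w Phi_wu : R -> R -> R) (r L : R).
Hypotheses (Hr : 0 < r)
  (Hw : forall u w, 0 <= u <= r -> 0 <= w <= r -> derivable_pt_lim (Phi u) w (Phi_w u w))
  (Hu : forall u w, 0 <= u <= r -> 0 <= w <= r ->
          derivable_pt_lim (fun u' => Phi_w u' w) u (Phi_wu u w))
  (Hc : forall e, 0 < e -> exists d, 0 < d /\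
          forall u w, 0 <= u < d -> 0 <= w < d -> Rabs (Phi_wu u w - L) < e).

(* The mean value theorem in [w] for [Phi s - Phi 0], then in [u] for [Phi_w _ w1]. *)
Lemma second_difference_mvt s : 0 < s <= r ->
  exists u w, 0 <= u <= s /\ 0 <= w <= s /\ second_difference Phi s = s * s * Phi_wu u w.
Proof.
  intros Hs.
  destruct (MVT_cor2 (fun w => Phi s w - Phi 0 w) (fun w => Phi_w s w - Phi_w 0 w) 0 s)
    as [w1 [E1 Hw1]]; [lra | intros; apply derivable_pt_lim_minus; apply Hw; lra|].
  destruct (MVT_cor2 (fun u => Phi_w u w1) (fun u => Phi_wu u w1) 0 s)
    as [u1 [E2 Hu1]]; [lra | intros; apply Hu; lra|].
  exists u1, w1. split; [lra | split; [lra|]].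
  unfold second_difference.
  replace (Phi s s - Phi s 0 - Phi 0 s + Phi 0 0)
    with ((Phi s s - Phi 0 s) - (Phi s 0 - Phi 0 0)) by ring.
  rewrite E1, E2. ring.
Qed.

Lemma second_difference_limit :
  limit1_in (fun s => second_difference Phi s / (s * s)) (fun s => 0 < s) L 0.
Proof.
  intros e He. destruct (Hc e He) as [d [Hd Hcd]].
  pose proof (Rmin_l d r). pose proof (Rmin_r d r).
  exists (Rmin d r). split; [apply Rmin_pos; lra|].
  intros s [Hs Hsd]. simpl in *. unfold R_dist in *.
  rewrite Rminus_0_r, Rabs_right in Hsd by lra.
  destruct (second_difference_mvt s) as [u [w [Hu' [Hw' E]]]]; [lra|].
  rewrite E. replace (s * s * Phi_wu u w / (s * s)) with (Phi_wu u w) by (field; lra).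
  apply Hcd; lra.
Qed.

End SecondDifference.

Lemma second_difference_limit_unique f L1 L2 :
  limit1_in f (fun s => 0 < s) L1 0 -> limit1_in f (fun s => 0 < s) L2 0 -> L1 = L2.
Proof. apply single_limit, adhDa_pos. Qed.

Lemma second_difference_limit_approx Delta L c C d0 : 0 < d0 ->
  limit1_in (fun s => Delta s / (s * s)) (fun s => 0 < s) L 0 ->
  (forall s, 0 < s < d0 -> Rabs (Delta s - s * s * c) <= C * s ^ 6) ->
  L = c.
Proof.
  intros Hd0 Hlim Happ.
  assert (Hlim' : limit1_in (fun s => Delta s / (s * s)) (fun s => 0 < s) c 0).
  { intros e He.
    set (d := Rmin (Rmin d0 1) (e / (Rabs C + 1))).
    assert (Hd : 0 < d) by (unfold d; repeat apply Rmin_pos; try lra;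
                            apply Rdiv_lt_0_compat; [lra | pose proof (Rabs_pos C); lra]).
    pose proof (Rmin_l (Rmin d0 1) (e / (Rabs C + 1))).
    pose proof (Rmin_r (Rmin d0 1) (e / (Rabs C + 1))).
    pose proof (Rmin_l d0 1). pose proof (Rmin_r d0 1).
    exists d. split; auto. intros s [Hs Hsd]. simpl in *. unfold R_dist in *.
    rewrite Rminus_0_r, Rabs_right in Hsd by lra.
    assert (Hs0 : 0 < s < d0) by (unfold d in Hsd; lra). specialize (Happ s Hs0).
    assert (Hs1 : s <= 1) by (unfold d in Hsd; lra).
    replace (Delta s / (s * s) - c) with ((Delta s - s * s * c) / (s * s)) by (field; lra).
    unfold Rdiv. rewrite Rabs_mult, (Rabs_right (/ (s * s))) by (apply Rle_ge, Rlt_le, Rinv_0_lt_compat; nra).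
    apply Rle_lt_trans with (C * s ^ 6 * / (s * s)).
    { apply Rmult_le_compat_r; [left; apply Rinv_0_lt_compat; nra | exact Happ]. }
    replace (C * s ^ 6 * / (s * s)) with (C * s ^ 4) by (field; lra).
    assert (s ^ 4 <= s) by (assert (s ^ 4 = s * (s * s * s)) by ring;
                             assert (s * s * s <= 1) by (assert (s * s <= 1) by nra; nra); nra).
    assert (C <= Rabs C) by apply Rle_abs.
    assert ((Rabs C + 1) * s < e).
    { apply Rmult_lt_reg_r with (/ (Rabs C + 1)); [apply Rinv_0_lt_compat; pose proof (Rabs_pos C); lra|].
      replace ((Rabs C + 1) * s * / (Rabs C + 1)) with s by (field; pose proof (Rabs_pos C); lra).
      unfold d in Hsd. lra. }
    pose proof (Rabs_pos C). pose proof (pow_le s 4 ltac:(lra)). nra. }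
  exact (second_difference_limit_unique _ _ _ Hlim Hlim').
Qed.

Lemma derivable_pt_lim_line f c x l : derivable_pt_lim f c l ->
  derivable_pt_lim (fun y => f (c + (y - x))) x l.
Proof.
  intros H. replace l with (l * 1) by ring.
  apply derivable_pt_lim_ext with (comp f (fun y => c + (y - x))); [reflexivity|].
  apply derivable_pt_lim_comp.
  - replace 1 with (0 + (1 - 0)) by ring.
    apply derivable_pt_lim_plus; [apply derivable_pt_lim_const|].
    apply derivable_pt_lim_minus; [apply derivable_pt_lim_id | apply derivable_pt_lim_const].
  - now replace (c + (x - x)) with c by ring.
Qed.

Section Schwarz.
Variables (n : nat) (T eps : R).
Hypotheses (hT : 0 < T) (heps : 0 < eps).
Notation D := (dom n T eps).

Lemma derivable_pt_lim_coordinate_line F t k (c : R -> nat -> R) w l :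
  (forall w', c w' = upd (c w) k (c w k + (w' - w))) -> D t (c w) -> (k < n)%nat ->
  has_pd D (Dx k) F t (c w) l -> derivable_pt_lim (fun w' => F t (c w')) w l.
Proof.
  intros Hline Hc Hk H.
  apply derivable_pt_lim_ext with (fun w' => F t (upd (c w) k (c w k + (w' - w)))).
  { intros z. now rewrite <- Hline. }
  apply (derivable_pt_lim_line (fun s => F t (upd (c w) k s))).
  exact (derivable_pt_lim_of_has_pd_x n T eps k F t (c w) l Hc Hk H).
Qed.

Lemma derivable_pt_lim_time_line F t0 x u l : D (t0 + u) x -> 0 < t0 + u ->
  has_pd D Dt F (t0 + u) x l -> derivable_pt_lim (fun u' => F (t0 + u') x) u l.
Proof.
  intros Hx Ht H.
  apply derivable_pt_lim_ext with (fun u' => F (t0 + u + (u' - u)) x).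
  { intros z. now replace (t0 + u + (z - u)) with (t0 + z) by ring. }
  apply (derivable_pt_lim_line (fun s => F s x)).
  exact (derivable_pt_lim_of_has_pd_t n T eps F (t0 + u) x l Hx Ht H).
Qed.

Section Interior.
Variables (F : R -> (nat -> R) -> R) (t0 : R) (x0 : nat -> R) (a : nat).
Hypotheses (HF : smooth_on n D F) (Hx0 : D t0 x0) (Ht0 : 0 < t0) (Ha : (a < n)%nat).

Let Y (w : R) : nat -> R := upd x0 a (x0 a + w).
Let r := Rmin (Rmin t0 (T - t0)) (eps - Rabs (x0 a)) / 2.

Lemma Y_line w : forall w', Y w' = upd (Y w) a (Y w a + (w' - w)).
Proof.
  intros w'. unfold Y. rewrite upd_upd, upd_eq. f_equal. ring.
Qed.

Lemma Y_close w k : Rabs (Y w k - x0 k) <= Rabs w.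
Proof.
  unfold Y, upd. destruct (Nat.eqb_spec k a) as [->|].
  - replace (x0 a + w - x0 a) with w by ring. lra.
  - rewrite Rminus_diag, Rabs_R0. apply Rabs_pos.
Qed.

Lemma r_pos : 0 < r.
Proof.
  pose proof Hx0 as [Ht [Hb _]]. pose proof (Hb a Ha).
  unfold r. assert (0 < Rmin (Rmin t0 (T - t0)) (eps - Rabs (x0 a))); [|lra].
  repeat apply Rmin_pos; lra.
Qed.

Lemma dom_square u w : 0 <= u <= r -> 0 <= w <= r -> D (t0 + u) (Y w) /\ 0 < t0 + u.
Proof.
  intros Hu Hw. pose proof Hx0 as [Ht [Hb _]]. pose proof (Hb a Ha).
  pose proof (Rmin_l (Rmin t0 (T - t0)) (eps - Rabs (x0 a))).
  pose proof (Rmin_r (Rmin t0 (T - t0)) (eps - Rabs (x0 a))).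
  pose proof (Rmin_l t0 (T - t0)). pose proof (Rmin_r t0 (T - t0)). unfold r in *.
  split; [|lra]. unfold Y. apply (dom_upd n T eps); auto.
  - apply (dom_time n T eps t0); auto; lra.
  - eapply Rle_lt_trans; [apply Rabs_triang|]. rewrite (Rabs_right w); lra.
Qed.

Lemma continuous_on_square G : smooth_on n D G ->
  forall e, 0 < e -> exists d, 0 < d /\
    forall u w, 0 <= u < d -> 0 <= w < d -> Rabs (G (t0 + u) (Y w) - G t0 x0) < e.
Proof.
  intros HG e He.
  destruct (smooth_on_cont n T eps G HG t0 x0 Hx0 e He) as [dc [Hdc Hc]].
  pose proof r_pos. pose proof (Rmin_l dc r). pose proof (Rmin_r dc r).
  exists (Rmin dc r). split; [apply Rmin_pos; lra|]. intros u w Hu Hw.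
  apply Hc; [apply dom_square; lra | |].
  - replace (t0 + u - t0) with u by ring. rewrite Rabs_right; lra.
  - intros k Hk. eapply Rle_lt_trans; [apply Y_close|]. rewrite Rabs_right; lra.
Qed.

(* Both orders of differentiation compute the limit of the same second difference quotient. *)
Lemma schwarz_interior : pd D Dt (pd D (Dx a) F) t0 x0 = pd D (Dx a) (pd D Dt F) t0 x0.
Proof.
  destruct (smooth_on_pd n T eps F (Dx a) HF Ha) as [SFa HFa].
  destruct (smooth_on_pd n T eps F Dt HF I) as [SFt HFt].
  destruct (smooth_on_pd n T eps _ Dt SFa I) as [SFat HFat].
  destruct (smooth_on_pd n T eps _ (Dx a) SFt Ha) as [SFta HFta].
  set (Phi := fun u w => F (t0 + u) (Y w)).
  apply (second_difference_limit_unique (fun s => second_difference Phi s / (s * s))).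
  - apply (second_difference_limit Phi (fun u w => pd D (Dx a) F (t0 + u) (Y w))
             (fun u w => pd D Dt (pd D (Dx a) F) (t0 + u) (Y w)) r); [apply r_pos | | |].
    + intros u w Hu Hw. destruct (dom_square u w Hu Hw) as [HD _].
      apply (derivable_pt_lim_coordinate_line F (t0 + u) a Y w); auto using Y_line.
    + intros u w Hu Hw. destruct (dom_square u w Hu Hw) as [HD Hpos].
      apply (derivable_pt_lim_time_line (pd D (Dx a) F) t0 (Y w) u); auto.
    + exact (continuous_on_square _ SFat).
  - apply limit1_ext with (fun s => second_difference (fun w u => Phi u w) s / (s * s)).
    { intros s _. now rewrite second_difference_swap. }
    apply (second_difference_limit (fun w u => Phi u w) (fun w u => pd D Dt F (t0 + u) (Y w))
             (fun w u => pd D (Dx a) (pd D Dt F) (t0 + u) (Y w)) r); [apply r_pos | | |].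
    + intros w u Hw Hu. destruct (dom_square u w Hu Hw) as [HD Hpos].
      apply (derivable_pt_lim_time_line F t0 (Y w) u); auto.
    + intros w u Hw Hu. destruct (dom_square u w Hu Hw) as [HD _].
      apply (derivable_pt_lim_coordinate_line (pd D Dt F) (t0 + u) a Y w); auto using Y_line.
    + intros e He. destruct (continuous_on_square _ SFta e He) as [d [Hd Hc]].
      exists d. split; auto.
Qed.

End Interior.

(* At the initial time the identity is reached by continuity from interior times. *)
Lemma schwarz F t x a : smooth_on n D F -> D t x -> (a < n)%nat ->
  pd D Dt (pd D (Dx a) F) t x = pd D (Dx a) (pd D Dt F) t x.
Proof.
  intros HF Hx Ha. destruct (Rlt_dec 0 t) as [Hpos|Hpos]; [apply schwarz_interior; auto|].
  pose proof Hx as [Ht _]. assert (t = 0) by lra. subst t.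
  destruct (smooth_on_pd n T eps F (Dx a) HF Ha) as [SFa _].
  destruct (smooth_on_pd n T eps F Dt HF I) as [SFt _].
  destruct (smooth_on_pd n T eps _ Dt SFa I) as [SFat _].
  destruct (smooth_on_pd n T eps _ (Dx a) SFt Ha) as [SFta _].
  apply eq_of_close. intros e He.
  destruct (smooth_on_cont n T eps _ SFat 0 x Hx e He) as [d1 [Hd1 C1]].
  destruct (smooth_on_cont n T eps _ SFta 0 x Hx e He) as [d2 [Hd2 C2]].
  set (t := Rmin (Rmin d1 d2) T / 2).
  assert (Htt : 0 < t < T /\ t < d1 /\ t < d2).
  { pose proof (Rmin_l (Rmin d1 d2) T). pose proof (Rmin_r (Rmin d1 d2) T).
    pose proof (Rmin_l d1 d2). pose proof (Rmin_r d1 d2).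
    assert (0 < Rmin (Rmin d1 d2) T) by (repeat apply Rmin_pos; lra). unfold t; lra. }
  assert (Hxt : D t x) by (apply (dom_time n T eps 0); auto; lra).
  assert (Hxx : forall k, (k < n)%nat -> Rabs (x k - x k) < d1 /\ Rabs (x k - x k) < d2)
    by (intros; rewrite Rminus_diag, Rabs_R0; lra).
  assert (Htd : Rabs (t - 0) < d1 /\ Rabs (t - 0) < d2) by (rewrite Rminus_0_r, Rabs_right; lra).
  specialize (C1 t x Hxt (proj1 Htd) (fun k Hk => proj1 (Hxx k Hk))).
  specialize (C2 t x Hxt (proj2 Htd) (fun k Hk => proj2 (Hxx k Hk))).
  rewrite (schwarz_interior F t x a HF Hxt (proj1 (proj1 Htt)) Ha) in C1.
  rewrite <- Rabs_Ropp in C1.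
  replace (pd D Dt (pd D (Dx a) F) 0 x - pd D (Dx a) (pd D Dt F) 0 x) with
    (- (pd D (Dx a) (pd D Dt F) t x - pd D Dt (pd D (Dx a) F) 0 x)
     + (pd D (Dx a) (pd D Dt F) t x - pd D (Dx a) (pd D Dt F) 0 x)) by ring.
  eapply Rle_lt_trans; [apply Rabs_triang | lra].
Qed.

Definition plane_pt (a b : nat) (u w : R) : nat -> R := fun m => kron m a * u + kron m b * w.

Lemma plane_pt_line_a a b u w u' :
  plane_pt a b u' w = upd (plane_pt a b u w) a (plane_pt a b u w a + (u' - u)).
Proof.
  apply functional_extensionality. intros m. unfold plane_pt, upd, kron.
  destruct (Nat.eqb_spec m a) as [->|]; [rewrite Nat.eqb_refl|]; destruct Nat.eqb; ring.
Qed.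

Lemma plane_pt_line_b a b u w w' :
  plane_pt a b u w' = upd (plane_pt a b u w) b (plane_pt a b u w b + (w' - w)).
Proof.
  apply functional_extensionality. intros m. unfold plane_pt, upd, kron.
  destruct (Nat.eqb_spec m b) as [->|]; [rewrite Nat.eqb_refl|]; destruct Nat.eqb; ring.
Qed.

Lemma Rabs_plane_pt_le a b u w m : Rabs (plane_pt a b u w m) <= Rabs u + Rabs w.
Proof.
  unfold plane_pt. apply Rabs_plus_le.
  - rewrite <- (Rmult_1_l (Rabs u)). apply Rabs_mult_le; auto using Rabs_kron_le; lra.
  - rewrite <- (Rmult_1_l (Rabs w)). apply Rabs_mult_le; auto using Rabs_kron_le; lra.
Qed.

Lemma dom_plane_pt a b u w : (a < n)%nat -> (b < n)%nat -> Rabs u + Rabs w < eps ->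
  D 0 (plane_pt a b u w).
Proof.
  intros Ha Hb Huw. split; [lra|]. split; intros k Hk.
  - eapply Rle_lt_trans; [apply Rabs_plane_pt_le | exact Huw].
  - unfold plane_pt. rewrite !kron_neq by lia. ring.
Qed.

Lemma second_difference_at_origin K a b : smooth_on n D K -> (a < n)%nat -> (b < n)%nat ->
  limit1_in (fun s => second_difference (fun u w => K 0 (plane_pt a b u w)) s / (s * s))
    (fun s => 0 < s) (pd D (Dx a) (pd D (Dx b) K) 0 origin) 0.
Proof.
  intros HK Ha Hb.
  destruct (smooth_on_pd n T eps K (Dx b) HK Hb) as [SKb HKb].
  destruct (smooth_on_pd n T eps _ (Dx a) SKb Ha) as [SKab HKab].
  assert (HD : forall u w, 0 <= u <= eps / 3 -> 0 <= w <= eps / 3 -> D 0 (plane_pt a b u w))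
    by (intros; apply dom_plane_pt; auto; rewrite !Rabs_right; lra).
  apply (second_difference_limit _ (fun u w => pd D (Dx b) K 0 (plane_pt a b u w))
           (fun u w => pd D (Dx a) (pd D (Dx b) K) 0 (plane_pt a b u w)) (eps / 3)); [lra | | |].
  - intros u w Hu Hw.
    apply (derivable_pt_lim_coordinate_line K 0 b (plane_pt a b u)); auto using plane_pt_line_b.
  - intros u w Hu Hw.
    apply (derivable_pt_lim_coordinate_line (pd D (Dx b) K) 0 a (fun u' => plane_pt a b u' w));
      auto using plane_pt_line_a.
  - intros e He.
    assert (D0 : D 0 origin) by (apply dom_origin; auto).
    destruct (smooth_on_cont n T eps _ SKab 0 origin D0 e He) as [dc [Hdc Hc]].
    pose proof (Rmin_l (dc / 2) (eps / 3)). pose proof (Rmin_r (dc / 2) (eps / 3)).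
    exists (Rmin (dc / 2) (eps / 3)). split; [apply Rmin_pos; lra|]. intros u w Hu Hw.
    apply Hc; [apply HD; lra | rewrite Rminus_diag, Rabs_R0; lra|].
    intros k Hk. unfold origin. rewrite Rminus_0_r.
    eapply Rle_lt_trans; [apply Rabs_plane_pt_le | rewrite !Rabs_right; lra].
Qed.

End Schwarz.

(** * The cubic [f] and the metric of its graph *)

(* [ind_le q r] is the coefficient [a_{rq}] of the paper. *)
Definition ind_le (q r : nat) : R := if Nat.leb q r then 1 else 0.

Definition f_grad (n k : nat) (x : nat -> R) : R :=
  Rsum n (fun q => ind_le q k * x q ^ 2) + 2 * x k * Rsum n (fun r => ind_le k r * x r).

Definition f_hess (n a k : nat) (x : nat -> R) : R :=
  2 * ind_le a k * x a + 2 * kron k a * Rsum n (fun r => ind_le k r * x r) + 2 * x k * ind_le k a.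

Definition f_third (a k b : nat) : R :=
  2 * ind_le a k * kron a b + 2 * kron k a * ind_le k b + 2 * kron k b * ind_le k a.

Definition graph_g (n : nat) (x : nat -> R) (i j : nat) : R :=
  kron i j + f_grad n i x * f_grad n j x.

Definition graph_dg (n : nat) (x : nat -> R) (a i j : nat) : R :=
  f_hess n a i x * f_grad n j x + f_grad n i x * f_hess n a j x.

Definition graph_ddg (n : nat) (x : nat -> R) (a b i j : nat) : R :=
  f_third b i a * f_grad n j x + f_hess n b i x * f_hess n a j x
  + f_hess n a i x * f_hess n b j x + f_grad n i x * f_third b j a.

Ltac derive_poly := repeat first
  [ apply derivable_pt_lim_plus | apply derivable_pt_lim_mult | apply derivable_pt_lim_const
  | apply derivable_pt_lim_upd | apply derivable_pt_lim_Rsum; intros ].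

Lemma derivable_pt_lim_f_ex n k x : (k < n)%nat ->
  derivable_pt_lim (fun s => f_ex n (upd x k s)) (x k) (f_grad n k x).
Proof.
  intros Hk. unfold f_ex. eapply derivable_pt_lim_val.
  { apply derivable_pt_lim_Rsum. intros r Hr. apply derivable_pt_lim_Rsum. intros q Hq.
    apply derivable_pt_lim_ext
      with (fun s => (ind_le q r * upd x k s r) * (upd x k s q * upd x k s q)).
    { intros s. unfold ind_le. simpl. ring. }
    derive_poly. }
  cbv beta. rewrite upd_same. unfold f_grad.
  rewrite (Rsum_ext n _ (fun r => Rsum n (fun q => kron r k * (ind_le q r * x q ^ 2))
                                 + Rsum n (fun q => kron q k * (2 * x q * (ind_le q r * x r))))).
  2:{ intros r Hr. rewrite <- Rsum_plus. apply Rsum_ext; intros; ring. }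
  rewrite Rsum_plus, (Rsum_swap n n (fun r q => kron q k * (2 * x q * (ind_le q r * x r)))).
  rewrite (Rsum_ext n (fun r => Rsum n (fun q => kron r k * (ind_le q r * x q ^ 2)))
             (fun r => kron r k * Rsum n (fun q => ind_le q r * x q ^ 2))) by (intros; apply Rsum_scal_l).
  rewrite (Rsum_ext n (fun q => Rsum n (fun r => kron q k * (2 * x q * (ind_le q r * x r))))
             (fun q => kron q k * (2 * x q * Rsum n (fun r => ind_le q r * x r))))
    by (intros; rewrite !Rsum_scal_l; reflexivity).
  rewrite !Rsum_kron_l by auto. ring.
Qed.

Lemma derivable_pt_lim_f_grad n a k x : (a < n)%nat ->
  derivable_pt_lim (fun s => f_grad n k (upd x a s)) (x a) (f_hess n a k x).
Proof.
  intros Ha. unfold f_grad. eapply derivable_pt_lim_val.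
  { apply derivable_pt_lim_plus.
    - apply derivable_pt_lim_Rsum. intros q Hq.
      apply derivable_pt_lim_ext with (fun s => ind_le q k * (upd x a s q * upd x a s q)).
      { intros s. simpl. ring. }
      derive_poly.
    - derive_poly. }
  cbv beta. rewrite upd_same. unfold f_hess.
  rewrite (Rsum_ext n _ (fun q => kron q a * (2 * ind_le q k * x q))) by (intros; ring).
  rewrite (Rsum_ext n (fun r => 0 * x r + ind_le k r * kron r a) (fun r => kron r a * ind_le k r))
    by (intros; ring).
  rewrite !Rsum_kron_l by auto. ring.
Qed.

Lemma derivable_pt_lim_f_hess n a k b x : (b < n)%nat ->
  derivable_pt_lim (fun s => f_hess n a k (upd x b s)) (x b) (f_third a k b).
Proof.
  intros Hb. unfold f_hess. eapply derivable_pt_lim_val.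
  { derive_poly. }
  cbv beta. rewrite upd_same.
  rewrite (Rsum_ext n (fun r => 0 * x r + ind_le k r * kron r b) (fun r => kron r b * ind_le k r))
    by (intros; ring).
  rewrite !Rsum_kron_l by auto. unfold f_third. rewrite (kron_sym a b). ring.
Qed.

Lemma derivable_pt_lim_graph_g n x a i j : (a < n)%nat ->
  derivable_pt_lim (fun s => graph_g n (upd x a s) i j) (x a) (graph_dg n x a i j).
Proof.
  intros Ha. unfold graph_g. eapply derivable_pt_lim_val.
  { apply derivable_pt_lim_plus; [apply derivable_pt_lim_const|].
    apply derivable_pt_lim_mult; apply derivable_pt_lim_f_grad; auto. }
  cbv beta. rewrite upd_same. unfold graph_dg. ring.
Qed.

Lemma derivable_pt_lim_graph_dg n x a b i j : (a < n)%nat ->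
  derivable_pt_lim (fun s => graph_dg n (upd x a s) b i j) (x a) (graph_ddg n x a b i j).
Proof.
  intros Ha. unfold graph_dg. eapply derivable_pt_lim_val.
  { apply derivable_pt_lim_plus; apply derivable_pt_lim_mult;
      auto using derivable_pt_lim_f_grad, derivable_pt_lim_f_hess. }
  cbv beta. rewrite upd_same. unfold graph_ddg. ring.
Qed.

Lemma pdx_f_ex n k x : (k < n)%nat -> pdx (f_ex n) k x = f_grad n k x.
Proof.
  intros Hk. unfold pdx.
  assert (H : deriv_within (fun s => f_ex n (upd x k s)) (fun _ => True) (x k) (f_grad n k x))
    by (apply deriv_within_of_derivable_pt_lim, derivable_pt_lim_f_ex; auto).
  eapply deriv_within_unique; [| apply epsilon_spec; exists (f_grad n k x); exact H | exact H].
  intros d Hd. exists (x k + d / 2). repeat split; try lra. rewrite Rabs_right; lra.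
Qed.

Lemma graph_metric_f_ex n x i j : (i < n)%nat -> (j < n)%nat ->
  graph_metric (f_ex n) x i j = graph_g n x i j.
Proof. intros. unfold graph_metric, graph_g. rewrite !pdx_f_ex; auto. Qed.

Lemma f_grad_origin n k : f_grad n k origin = 0.
Proof. unfold f_grad, origin. rewrite !Rsum_eq_0 by (intros; ring). ring. Qed.

Lemma f_hess_origin n a k : f_hess n a k origin = 0.
Proof. unfold f_hess, origin. rewrite Rsum_eq_0 by (intros; ring). ring. Qed.

Lemma graph_g_origin n i j : graph_g n origin i j = kron i j.
Proof. unfold graph_g. rewrite !f_grad_origin. ring. Qed.

Lemma graph_dg_origin n a i j : graph_dg n origin a i j = 0.
Proof. unfold graph_dg. rewrite !f_grad_origin, !f_hess_origin. ring. Qed.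

Lemma graph_ddg_origin n a b i j : graph_ddg n origin a b i j = 0.
Proof. unfold graph_ddg. rewrite !f_grad_origin, !f_hess_origin. ring. Qed.

Lemma f_third_swap12 a b c : f_third a b c = f_third b a c.
Proof.
  unfold f_third. destruct (Nat.eq_dec a b) as [->|]; [reflexivity|].
  rewrite !(kron_neq a b), !(kron_neq b a) by auto. rewrite (kron_sym b c). ring.
Qed.

Lemma f_third_swap23 a b c : f_third a b c = f_third a c b.
Proof.
  unfold f_third.
  destruct (Nat.eq_dec a b), (Nat.eq_dec b c), (Nat.eq_dec a c); subst;
  rewrite ?kron_diag, ?kron_neq by congruence; try ring; congruence.
Qed.

Lemma f_hess_sym n a k y : f_hess n a k y = f_hess n k a y.
Proof.
  unfold f_hess. destruct (Nat.eq_dec a k) as [->|]; [reflexivity|].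
  rewrite !kron_neq by lia. ring.
Qed.

Lemma f_hess_plane_pt n a k a0 b0 u w : (a0 < n)%nat -> (b0 < n)%nat ->
  f_hess n a k (plane_pt a0 b0 u w) = u * f_third a k a0 + w * f_third a k b0.
Proof.
  intros. unfold f_hess, plane_pt.
  rewrite (Rsum_ext n _ (fun r => kron r a0 * (ind_le k r * u) + kron r b0 * (ind_le k r * w)))
    by (intros; ring).
  rewrite Rsum_plus, !Rsum_kron_l by auto. unfold f_third.
  rewrite (kron_sym a a0), (kron_sym a b0). ring.
Qed.

Section Bounds.
Variables (n : nat) (y : nat -> R) (r : R).
Hypotheses (Hr : 0 <= r) (Hy : forall m, (m < n)%nat -> Rabs (y m) <= r).

Lemma Rabs_ind_le_le q k : Rabs (ind_le q k) <= 1.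
Proof. unfold ind_le. destruct Nat.leb; rewrite ?Rabs_R1, ?Rabs_R0; lra. Qed.

Lemma Rabs_f_third_le a b c : Rabs (f_third a b c) <= 6.
Proof.
  unfold f_third. replace 6 with (2 * 1 * 1 + 2 * 1 * 1 + 2 * 1 * 1) by ring.
  repeat apply Rabs_plus_le; repeat apply Rabs_mult_le;
    auto using Rabs_ind_le_le, Rabs_kron_le; rewrite Rabs_right; lra.
Qed.

Lemma Rabs_f_grad_le k : (k < n)%nat -> Rabs (f_grad n k y) <= 3 * INR n * r ^ 2.
Proof.
  intros Hk. unfold f_grad.
  replace (3 * INR n * r ^ 2) with (INR n * (1 * (r * r)) + 2 * r * (INR n * (1 * r))) by ring.
  apply Rabs_plus_le; [|apply Rabs_mult_le; [apply Rabs_mult_le; [rewrite Rabs_right; lra|auto]|]];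
    apply Rsum_Rabs_le; intros q Hq; apply Rabs_mult_le; auto using Rabs_ind_le_le.
  replace (y q ^ 2) with (y q * y q) by ring. apply Rabs_mult_le; auto.
Qed.

Lemma Rabs_f_hess_le a k : (a < n)%nat -> (k < n)%nat ->
  Rabs (f_hess n a k y) <= (4 + 2 * INR n) * r.
Proof.
  intros Ha Hk. unfold f_hess.
  replace ((4 + 2 * INR n) * r) with (2 * 1 * r + 2 * 1 * (INR n * (1 * r)) + 2 * r * 1) by ring.
  apply Rabs_plus_le; [apply Rabs_plus_le|]; repeat apply Rabs_mult_le; auto;
    try (rewrite Rabs_right; lra); auto using Rabs_ind_le_le, Rabs_kron_le.
  apply Rsum_Rabs_le. intros q Hq. apply Rabs_mult_le; auto using Rabs_ind_le_le.
Qed.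

Let gb := 3 * INR n * r ^ 2.
Let hb := (4 + 2 * INR n) * r.

Lemma graph_g_near_identity : near_identity n (graph_g n y) (gb * gb).
Proof.
  intros i j Hi Hj. unfold graph_g.
  replace (kron i j + f_grad n i y * f_grad n j y - kron i j)
    with (f_grad n i y * f_grad n j y) by ring.
  apply Rabs_mult_le; apply Rabs_f_grad_le; auto.
Qed.

Lemma Rabs_graph_dg_le a i j : (a < n)%nat -> (i < n)%nat -> (j < n)%nat ->
  Rabs (graph_dg n y a i j) <= 2 * hb * gb.
Proof.
  intros. unfold graph_dg. replace (2 * hb * gb) with (hb * gb + gb * hb) by ring.
  apply Rabs_plus_le; apply Rabs_mult_le; auto using Rabs_f_grad_le, Rabs_f_hess_le.
Qed.

Lemma Rabs_graph_ddg_le a b i j : (a < n)%nat -> (b < n)%nat -> (i < n)%nat -> (j < n)%nat ->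
  Rabs (graph_ddg n y a b i j) <= 12 * gb + 2 * (hb * hb).
Proof.
  intros. unfold graph_ddg.
  replace (12 * gb + 2 * (hb * hb)) with (6 * gb + hb * hb + hb * hb + gb * 6) by ring.
  repeat apply Rabs_plus_le; apply Rabs_mult_le;
    auto using Rabs_f_grad_le, Rabs_f_hess_le, Rabs_f_third_le.
Qed.

End Bounds.

Definition gauss_ric (n : nat) (y : nat -> R) (j k : nat) : R :=
  Rsum n (fun i => f_hess n i i y * f_hess n j k y - f_hess n i j y * f_hess n i k y).

Definition gauss_ric_dd (n a b j k : nat) : R :=
  Rsum n (fun i => f_third i i a * f_third j k b + f_third i i b * f_third j k a
                   - f_third i j a * f_third i k b - f_third i j b * f_third i k a).

Lemma second_difference_gauss_ric n a b j k s : (a < n)%nat -> (b < n)%nat ->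
  second_difference (fun u w => gauss_ric n (plane_pt a b u w) j k) s = s * s * gauss_ric_dd n a b j k.
Proof.
  intros. unfold second_difference, gauss_ric, gauss_ric_dd.
  rewrite <- !Rsum_minus, <- Rsum_plus, <- Rsum_scal_l. apply Rsum_ext. intros i Hi.
  rewrite !f_hess_plane_pt by auto. ring.
Qed.

(** * Algebra of the curvature formulas *)

Lemma limit1_scal P c f l x0 :
  limit1_in f P l x0 -> limit1_in (fun x => c * f x) P (c * l) x0.
Proof. intros H. apply limit_mul; [exact (limit_free (fun _ => c) P 0 x0) | exact H]. Qed.

Lemma limit1_Rsum n (P : R -> Prop) (f : nat -> R -> R) l x0 :
  (forall i, (i < n)%nat -> limit1_in (f i) P (l i) x0) ->
  limit1_in (fun x => Rsum n (fun i => f i x)) P (Rsum n l) x0.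
Proof.
  induction n; intros H; simpl; [exact (limit_free (fun _ => 0) P 0 x0)|].
  apply limit_plus; [apply IHn; intros|]; apply H; lia.
Qed.

Definition zero3 : nat -> nat -> nat -> R := fun _ _ _ => 0.

Lemma dgi_zero n gi a m l : dgi n gi zero3 a m l = 0.
Proof. unfold dgi, zero3. rewrite Rsum_eq_0; [ring|]. intros. apply Rsum_eq_0. intros. ring. Qed.

Lemma Gam_zero n gi m j k : Gam n gi zero3 m j k = 0.
Proof. unfold Gam, zero3. rewrite Rsum_eq_0; [ring|]. intros. ring. Qed.

Section Ext.
Variables (n : nat) (gi gi' : nat -> nat -> R) (dg dg' : nat -> nat -> nat -> R)
  (ddg ddg' : nat -> nat -> nat -> nat -> R).
Hypothesis Egi : forall a b, (a < n)%nat -> (b < n)%nat -> gi a b = gi' a b.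
Hypothesis Edg : forall a b c, (a < n)%nat -> (b < n)%nat -> (c < n)%nat -> dg a b c = dg' a b c.
Hypothesis Eddg : forall a b c d, (a < n)%nat -> (b < n)%nat -> (c < n)%nat -> (d < n)%nat ->
  ddg a b c d = ddg' a b c d.

Lemma dgi_ext a m l : (a < n)%nat -> (m < n)%nat -> (l < n)%nat ->
  dgi n gi dg a m l = dgi n gi' dg' a m l.
Proof.
  intros. unfold dgi. f_equal. apply Rsum_ext; intros. apply Rsum_ext; intros.
  rewrite !Egi, Edg by auto. reflexivity.
Qed.

Lemma Gam_ext m j k : (m < n)%nat -> (j < n)%nat -> (k < n)%nat ->
  Gam n gi dg m j k = Gam n gi' dg' m j k.
Proof. intros. unfold Gam. f_equal. apply Rsum_ext; intros. rewrite !Egi, !Edg by auto. reflexivity. Qed.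

Lemma dGam_ext i m j k : (i < n)%nat -> (m < n)%nat -> (j < n)%nat -> (k < n)%nat ->
  dGam n gi dg ddg i m j k = dGam n gi' dg' ddg' i m j k.
Proof.
  intros. unfold dGam. f_equal. apply Rsum_ext; intros.
  rewrite !Egi, !Edg, !Eddg, dgi_ext by auto. reflexivity.
Qed.

Lemma Rup_ext i j k m : (i < n)%nat -> (j < n)%nat -> (k < n)%nat -> (m < n)%nat ->
  Rup n gi dg ddg i j k m = Rup n gi' dg' ddg' i j k m.
Proof.
  intros. unfold Rup. rewrite !dGam_ext by auto. f_equal.
  apply Rsum_ext; intros. rewrite !Gam_ext by auto. reflexivity.
Qed.

Lemma Ric_ext j k : (j < n)%nat -> (k < n)%nat -> Ric n gi dg ddg j k = Ric n gi' dg' ddg' j k.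
Proof. intros. unfold Ric. apply Rsum_ext; intros. apply Rup_ext; auto. Qed.

End Ext.

Lemma minv_ext n A A' : (forall a b, (a < n)%nat -> (b < n)%nat -> A a b = A' a b) ->
  minv n A = minv n A'.
Proof.
  intros E. unfold minv. f_equal. apply functional_extensionality. intros B.
  apply propositional_extensionality.
  split; intros H i j Hi Hj; rewrite <- (H i j Hi Hj); apply Rsum_ext; intros; rewrite E; auto.
Qed.

(* Every term of [Riem] is linear in [ddg] or has two factors of [dg]; the [_split] variants
   take [ddg] and one of the two [dg] factors from separate arguments [dgq], [ddgq]. *)
Definition dGam_split n gi dg dgq ddgq (i m j k : nat) : R :=
  / 2 * Rsum n (fun l => dgi n gi dg i m l * (dgq j k l + dgq k j l - dgq l j k)
                        + gi m l * (ddgq i j k l + ddgq i k j l - ddgq i l j k)).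

Definition Rup_split n gi dg dgq ddgq (i j k m : nat) : R :=
  dGam_split n gi dg dgq ddgq i m j k - dGam_split n gi dg dgq ddgq j m i k
  + Rsum n (fun p => Gam n gi dg p j k * Gam n gi dgq m i p - Gam n gi dg p i k * Gam n gi dgq m j p).

Definition Riem_split n (g gi : nat -> nat -> R) dg dgq ddgq (i j k l : nat) : R :=
  Rsum n (fun m => Rup_split n gi dg dgq ddgq i j k m * g m l).

Section Scale.
Variables (n : nat) (g gi : nat -> nat -> R) (dg dgq : nat -> nat -> nat -> R)
  (ddg ddgq : nat -> nat -> nat -> nat -> R) (c : R).
Hypothesis Hdg : forall a b d, (a < n)%nat -> (b < n)%nat -> (d < n)%nat -> dg a b d = c * dgq a b d.
Hypothesis Hddg : forall a b d e, (a < n)%nat -> (b < n)%nat -> (d < n)%nat -> (e < n)%nat ->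
  ddg a b d e = c * ddgq a b d e.

Lemma Gam_scale m j k : (m < n)%nat -> (j < n)%nat -> (k < n)%nat ->
  Gam n gi dg m j k = c * Gam n gi dgq m j k.
Proof.
  intros. unfold Gam. rewrite <- Rmult_assoc, (Rmult_comm c), Rmult_assoc. f_equal.
  rewrite <- Rsum_scal_l. apply Rsum_ext. intros l Hl. rewrite !Hdg by auto. ring.
Qed.

Lemma dGam_scale i m j k : (i < n)%nat -> (m < n)%nat -> (j < n)%nat -> (k < n)%nat ->
  dGam n gi dg ddg i m j k = c * dGam_split n gi dg dgq ddgq i m j k.
Proof.
  intros. unfold dGam, dGam_split. rewrite <- Rmult_assoc, (Rmult_comm c), Rmult_assoc. f_equal.
  rewrite <- Rsum_scal_l. apply Rsum_ext. intros l Hl. rewrite !Hdg, !Hddg by auto. ring.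
Qed.

Lemma Rup_scale i j k m : (i < n)%nat -> (m < n)%nat -> (j < n)%nat -> (k < n)%nat ->
  Rup n gi dg ddg i j k m = c * Rup_split n gi dg dgq ddgq i j k m.
Proof.
  intros. unfold Rup, Rup_split. rewrite !dGam_scale by auto.
  rewrite (Rsum_ext n _ (fun p => c * (Gam n gi dg p j k * Gam n gi dgq m i p
                                      - Gam n gi dg p i k * Gam n gi dgq m j p))).
  - rewrite Rsum_scal_l. ring.
  - intros p Hp. rewrite (Gam_scale m i p), (Gam_scale m j p) by auto. ring.
Qed.

Lemma Riem_scale i j k l : (i < n)%nat -> (j < n)%nat -> (k < n)%nat -> (l < n)%nat ->
  Riem n g gi dg ddg i j k l = c * Riem_split n g gi dg dgq ddgq i j k l.
Proof.
  intros. unfold Riem, Riem_split. rewrite <- Rsum_scal_l. apply Rsum_ext. intros m Hm.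
  rewrite Rup_scale by auto. ring.
Qed.

End Scale.

Section Limits.
Variables (n : nat) (P : R -> Prop) (t0 : R).

Definition lim2 (f : R -> nat -> nat -> R) l := forall i j, (i < n)%nat -> (j < n)%nat ->
  limit1_in (fun t => f t i j) P (l i j) t0.
Definition lim3 (f : R -> nat -> nat -> nat -> R) l := forall i j k,
  (i < n)%nat -> (j < n)%nat -> (k < n)%nat -> limit1_in (fun t => f t i j k) P (l i j k) t0.
Definition lim4 (f : R -> nat -> nat -> nat -> nat -> R) l := forall i j k m,
  (i < n)%nat -> (j < n)%nat -> (k < n)%nat -> (m < n)%nat ->
  limit1_in (fun t => f t i j k m) P (l i j k m) t0.

Variables (g gi : R -> nat -> nat -> R) (dg dgq : R -> nat -> nat -> nat -> R)
  (ddgq : R -> nat -> nat -> nat -> nat -> R).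
Variables (gl gil : nat -> nat -> R) (dgl dgql : nat -> nat -> nat -> R)
  (ddgql : nat -> nat -> nat -> nat -> R).
Hypotheses (Hg : lim2 g gl) (Hgi : lim2 gi gil) (Hdg : lim3 dg dgl) (Hdgq : lim3 dgq dgql)
  (Hddgq : lim4 ddgq ddgql).

Lemma limit1_dgi a m l : (a < n)%nat -> (m < n)%nat -> (l < n)%nat ->
  limit1_in (fun t => dgi n (gi t) (dg t) a m l) P (dgi n gil dgl a m l) t0.
Proof.
  intros. unfold dgi. apply limit_Ropp.
  apply (limit1_Rsum n P (fun p t => Rsum n (fun q => gi t m p * dg t a p q * gi t q l))).
  intros p Hp. apply (limit1_Rsum n P (fun q t => gi t m p * dg t a p q * gi t q l)). intros q Hq.
  apply limit_mul; [apply limit_mul|]; [apply Hgi | apply Hdg | apply Hgi]; auto.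
Qed.

Lemma limit1_Gam (dd : R -> nat -> nat -> nat -> R) ddl : lim3 dd ddl ->
  forall m j k, (m < n)%nat -> (j < n)%nat -> (k < n)%nat ->
  limit1_in (fun t => Gam n (gi t) (dd t) m j k) P (Gam n gil ddl m j k) t0.
Proof.
  intros Hd m j k Hm Hj Hk. unfold Gam. apply limit1_scal.
  apply (limit1_Rsum n P (fun l t => gi t m l * (dd t j k l + dd t k j l - dd t l j k))).
  intros l Hl. apply limit_mul; [apply Hgi; auto|].
  apply limit_minus; [apply limit_plus|]; apply Hd; auto.
Qed.

Lemma limit1_dGam_split i m j k : (i < n)%nat -> (m < n)%nat -> (j < n)%nat -> (k < n)%nat ->
  limit1_in (fun t => dGam_split n (gi t) (dg t) (dgq t) (ddgq t) i m j k) P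
    (dGam_split n gil dgl dgql ddgql i m j k) t0.
Proof.
  intros. unfold dGam_split. apply limit1_scal.
  apply (limit1_Rsum n P (fun l t => dgi n (gi t) (dg t) i m l * (dgq t j k l + dgq t k j l - dgq t l j k)
                        + gi t m l * (ddgq t i j k l + ddgq t i k j l - ddgq t i l j k))).
  intros l Hl. apply limit_plus; apply limit_mul.
  - apply limit1_dgi; auto.
  - apply limit_minus; [apply limit_plus|]; apply Hdgq; auto.
  - apply Hgi; auto.
  - apply limit_minus; [apply limit_plus|]; apply Hddgq; auto.
Qed.

Lemma limit1_Riem_split i j k l : (i < n)%nat -> (j < n)%nat -> (k < n)%nat -> (l < n)%nat ->
  limit1_in (fun t => Riem_split n (g t) (gi t) (dg t) (dgq t) (ddgq t) i j k l) P
    (Riem_split n gl gil dgl dgql ddgql i j k l) t0.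
Proof.
  intros. unfold Riem_split.
  apply (limit1_Rsum n P (fun m t => Rup_split n (gi t) (dg t) (dgq t) (ddgq t) i j k m * g t m l)).
  intros m Hm. apply limit_mul; [|apply Hg; auto]. unfold Rup_split.
  apply limit_plus; [apply limit_minus; apply limit1_dGam_split; auto|].
  apply (limit1_Rsum n P (fun p t => Gam n (gi t) (dg t) p j k * Gam n (gi t) (dgq t) m i p
                                      - Gam n (gi t) (dg t) p i k * Gam n (gi t) (dgq t) m j p)).
  intros p Hp. apply limit_minus; apply limit_mul; apply limit1_Gam; auto.
Qed.

End Limits.

Lemma limit1_minv_identity n P t0 (A : R -> nat -> nat -> R) :
  lim2 n P t0 A kron -> lim2 n P t0 (fun t => minv n (A t)) kron.
Proof.
  intros HA i j Hi Hj e He.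
  set (N := INR n). assert (HN : 0 <= N) by apply pos_INR.
  set (al := Rmin (e / 4) (1 / (2 * N + 2))).
  assert (Hal : 0 < al) by (apply Rmin_pos; [lra | apply Rdiv_lt_0_compat; lra]).
  assert (Hal1 : al <= e / 4) by apply Rmin_l.
  assert (Hal2 : al <= 1 / (2 * N + 2)) by apply Rmin_r.
  assert (Hsmall : N * al <= 1 / 2).
  { apply Rle_trans with (N * (1 / (2 * N + 2))); [apply Rmult_le_compat_l; auto|].
    apply Rmult_le_reg_r with (2 * N + 2); [lra|]. unfold Rdiv. field_simplify; lra. }
  destruct (exists_delta_forall n (fun a d => forall b, (b < n)%nat -> forall t, P t ->
              R_dist t t0 < d -> Rabs (A t a b - kron a b) < al)) as [d [Hd Hall]].
  - intros a d d' H [H1 H2] b Hb t Ht Htd. apply H; auto. lra.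
  - intros a Ha. apply exists_delta_forall.
    + intros b d d' H [H1 H2] t Ht Htd. apply H; auto. lra.
    + intros b Hb. destruct (HA a b Ha Hb al Hal) as [d [Hd Hc]].
      exists d. split; auto. intros t Ht Htd. apply (Hc t). auto.
  - exists d. split; auto. intros t [Ht Htd]. simpl. unfold R_dist.
    assert (Hnear : near_identity n (A t) al) by (intros a b Ha Hb; left; apply Hall; auto).
    pose proof (minv_near_identity n (A t) al (Rlt_le _ _ Hal) Hsmall Hnear i j Hi Hj). lra.
Qed.

(* The linearisation of the curvature at the Euclidean metric, in terms of [M a b c d],
   the second derivatives [d_a d_b g_cd]. *)
Definition lin_Riem (M : nat -> nat -> nat -> nat -> R) (i j k l : nat) : R :=
  / 2 * (M i j k l + M i k j l - M i l j k) - / 2 * (M j i k l + M j k i l - M j l i k).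

Lemma dGam_split_flat n dgq M i m j k : (m < n)%nat ->
  dGam_split n kron zero3 dgq M i m j k = / 2 * (M i j k m + M i k j m - M i m j k).
Proof.
  intros Hm. unfold dGam_split. f_equal.
  rewrite (Rsum_ext n _ (fun l => kron m l * (M i j k l + M i k j l - M i l j k))).
  - apply Rsum_kron_r; auto.
  - intros. rewrite dgi_zero. ring.
Qed.

Lemma Riem_split_flat n dgq M i j k l : (i < n)%nat -> (j < n)%nat -> (k < n)%nat -> (l < n)%nat ->
  Riem_split n kron kron zero3 dgq M i j k l = lin_Riem M i j k l.
Proof.
  intros. unfold Riem_split.
  rewrite (Rsum_ext n _ (fun m => kron m l * Rup_split n kron zero3 dgq M i j k m)) by (intros; ring).
  rewrite Rsum_kron_l by auto. unfold Rup_split.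
  rewrite Rsum_eq_0 by (intros; rewrite !Gam_zero; ring).
  rewrite !dGam_split_flat by auto. unfold lin_Riem. ring.
Qed.

Lemma Ric_flat_graph n y j k : (j < n)%nat -> (k < n)%nat ->
  Ric n kron zero3 (graph_ddg n y) j k = gauss_ric n y j k.
Proof.
  intros Hj Hk. unfold Ric, gauss_ric. apply Rsum_ext. intros i Hi. unfold Rup.
  rewrite Rsum_eq_0 by (intros; rewrite !Gam_zero; ring).
  change (dGam n kron zero3 (graph_ddg n y)) with (dGam_split n kron zero3 zero3 (graph_ddg n y)).
  rewrite !dGam_split_flat by auto. unfold graph_ddg.
  rewrite (f_third_swap23 j k i), (f_third_swap12 j i k), (f_third_swap23 k j i),
    (f_third_swap12 k i j), (f_third_swap23 i k j), (f_third_swap12 j i i),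
    (f_third_swap23 i j i), (f_third_swap12 k i i), (f_third_swap23 i k i).
  rewrite (f_hess_sym n k j), (f_hess_sym n j i), (f_hess_sym n k i).
  lra.
Qed.

Section Perturbation.
Variables (n : nat) (gi : nat -> nat -> R) (dg : nat -> nat -> nat -> R)
  (ddg : nat -> nat -> nat -> nat -> R) (al be ga : R).
Hypothesis Hal : 0 <= al <= 1.
Hypothesis Hgi : near_identity n gi al.
Hypothesis Hdg : forall a b c, (a < n)%nat -> (b < n)%nat -> (c < n)%nat -> Rabs (dg a b c) <= be.
Hypothesis Hddg : forall a b c d, (a < n)%nat -> (b < n)%nat -> (c < n)%nat -> (d < n)%nat ->
  Rabs (ddg a b c d) <= ga.
Let N := INR n.

Definition bound_dgi := N * (N * (2 * be * 2)).
Definition bound_Gam := / 2 * (N * (2 * (be + be + be))).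
Definition bound_dGam := / 2 * (N * (bound_dgi * (be + be + be) + al * (ga + ga + ga))).
Definition bound_Rup := bound_dGam + bound_dGam + N * (bound_Gam * bound_Gam + bound_Gam * bound_Gam).
Definition bound_Ric := N * bound_Rup.

Lemma Rabs_gi_le a b : (a < n)%nat -> (b < n)%nat -> Rabs (gi a b) <= 2.
Proof.
  intros. pose proof (Hgi a b H H0). pose proof (Rabs_triang_inv (gi a b) (kron a b)).
  pose proof (Rabs_kron_le a b). lra.
Qed.

Lemma Rabs_dgi_le a m l : (a < n)%nat -> (m < n)%nat -> (l < n)%nat ->
  Rabs (dgi n gi dg a m l) <= bound_dgi.
Proof.
  intros. unfold dgi, bound_dgi. rewrite Rabs_Ropp.
  apply Rsum_Rabs_le. intros p Hp. apply Rsum_Rabs_le. intros q Hq.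
  apply Rabs_mult_le; [apply Rabs_mult_le|]; auto using Rabs_gi_le.
Qed.

Lemma Rabs_Gam_le m j k : (m < n)%nat -> (j < n)%nat -> (k < n)%nat ->
  Rabs (Gam n gi dg m j k) <= bound_Gam.
Proof.
  intros. unfold Gam, bound_Gam. apply Rabs_mult_le; [rewrite Rabs_right; lra|].
  apply Rsum_Rabs_le. intros l Hl. apply Rabs_mult_le; auto using Rabs_gi_le.
  apply Rabs_minus_le; [apply Rabs_plus_le|]; auto.
Qed.

Lemma Rabs_dGam_sub_le i m j k : (i < n)%nat -> (m < n)%nat -> (j < n)%nat -> (k < n)%nat ->
  Rabs (dGam n gi dg ddg i m j k - dGam n kron zero3 ddg i m j k) <= bound_dGam.
Proof.
  intros. unfold dGam, bound_dGam. rewrite <- Rmult_minus_distr_l, <- Rsum_minus.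
  apply Rabs_mult_le; [rewrite Rabs_right; lra|].
  apply Rsum_Rabs_le. intros l Hl. rewrite dgi_zero. unfold zero3.
  replace (dgi n gi dg i m l * (dg j k l + dg k j l - dg l j k)
           + gi m l * (ddg i j k l + ddg i k j l - ddg i l j k)
           - (0 * (0 + 0 - 0) + kron m l * (ddg i j k l + ddg i k j l - ddg i l j k)))
    with (dgi n gi dg i m l * (dg j k l + dg k j l - dg l j k)
          + (gi m l - kron m l) * (ddg i j k l + ddg i k j l - ddg i l j k)) by ring.
  apply Rabs_plus_le; apply Rabs_mult_le; auto using Rabs_dgi_le;
    apply Rabs_minus_le; [apply Rabs_plus_le| |apply Rabs_plus_le|]; auto.
Qed.

Lemma Rabs_Rup_sub_le i j k m : (i < n)%nat -> (j < n)%nat -> (k < n)%nat -> (m < n)%nat ->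
  Rabs (Rup n gi dg ddg i j k m - Rup n kron zero3 ddg i j k m) <= bound_Rup.
Proof.
  intros. unfold Rup, bound_Rup.
  rewrite (Rsum_eq_0 n (fun p => Gam n kron zero3 p j k * Gam n kron zero3 m i p
                                 - Gam n kron zero3 p i k * Gam n kron zero3 m j p))
    by (intros; rewrite !Gam_zero; ring).
  match goal with |- Rabs (?A - ?B + ?S - (?A0 - ?B0 + 0)) <= _ =>
    replace (A - B + S - (A0 - B0 + 0)) with ((A - A0) - (B - B0) + S) by ring end.
  apply Rabs_plus_le; [apply Rabs_minus_le; apply Rabs_dGam_sub_le; auto|].
  apply Rsum_Rabs_le. intros p Hp. apply Rabs_minus_le; apply Rabs_mult_le; apply Rabs_Gam_le; auto.
Qed.

Lemma Rabs_Ric_sub_le j k : (j < n)%nat -> (k < n)%nat ->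
  Rabs (Ric n gi dg ddg j k - Ric n kron zero3 ddg j k) <= bound_Ric.
Proof.
  intros. unfold Ric, bound_Ric. rewrite <- Rsum_minus.
  apply Rsum_Rabs_le. intros i Hi. apply Rabs_Rup_sub_le; auto.
Qed.

End Perturbation.

(** * The value of [d_t Rm] at the origin *)

Lemma Rsum_ind_le_full m a : (m <= S a)%nat -> Rsum m (fun e => ind_le e a) = INR m.
Proof.
  induction m; intros Hm; [reflexivity|]. cbn [Rsum]. rewrite IHm by lia.
  unfold ind_le. destruct (Nat.leb_spec m a); [|lia]. rewrite S_INR. ring.
Qed.

Lemma Rsum_ind_le_l n a : (a < n)%nat -> Rsum n (fun e => ind_le e a) = INR a + 1.
Proof.
  induction n; intros Hn; [lia|]. cbn [Rsum]. unfold ind_le at 2.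
  destruct (Nat.eq_dec a n) as [->|].
  - rewrite Rsum_ind_le_full, Nat.leb_refl by lia. ring.
  - rewrite IHn by lia. destruct (Nat.leb_spec n a); [lia|]. ring.
Qed.

Lemma Rsum_ind_le_r n m : (m <= n)%nat -> Rsum n (fun e => ind_le m e) = INR n - INR m.
Proof.
  induction n; intros Hn.
  - replace m with 0%nat by lia. simpl. ring.
  - cbn [Rsum]. unfold ind_le at 2. destruct (Nat.eq_dec m (S n)) as [->|].
    + rewrite Rsum_eq_0; [destruct (Nat.leb_spec (S n) n); [lia|]; rewrite S_INR; ring|].
      intros i Hi. unfold ind_le. destruct (Nat.leb_spec (S n) i); [lia | auto].
    + rewrite IHn by lia. destruct (Nat.leb_spec m n); [|lia]. rewrite S_INR; ring.
Qed.

Definition count_ge2 (n c d : nat) : R := if Nat.leb c d then INR n - INR d else INR n - INR c.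

Lemma Rsum_ind_le_r2 n c d : (c < n)%nat -> (d < n)%nat ->
  Rsum n (fun e => ind_le c e * ind_le d e) = count_ge2 n c d.
Proof.
  intros. unfold count_ge2. destruct (Nat.leb_spec c d).
  - rewrite <- Rsum_ind_le_r by lia. apply Rsum_ext. intros e He. unfold ind_le.
    destruct (Nat.leb_spec c e), (Nat.leb_spec d e); try lia; ring.
  - rewrite <- Rsum_ind_le_r by lia. apply Rsum_ext. intros e He. unfold ind_le.
    destruct (Nat.leb_spec c e), (Nat.leb_spec d e); try lia; ring.
Qed.

Lemma Rsum_f_third_diag n a : (a < n)%nat -> Rsum n (fun e => f_third e e a) = 2 * INR a + 6.
Proof.
  intros. rewrite (Rsum_ext n _ (fun e => 4 * (kron e a * 1) + 2 * ind_le e a)).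
  - rewrite Rsum_plus, !Rsum_scal_l, Rsum_kron_l, Rsum_ind_le_l by auto. ring.
  - intros e He. unfold f_third. unfold ind_le at 1 3. rewrite Nat.leb_refl, kron_diag. ring.
Qed.

Definition f_third_pair (n c a d b : nat) : R :=
  2 * ind_le a c * f_third a d b + 2 * ind_le c a * f_third c d b
  + 2 * kron c a * (2 * ind_le c b * ind_le b d + 2 * ind_le c d * ind_le d b
                    + 2 * kron d b * count_ge2 n c d).

Lemma Rsum_f_third_mul n c a d b : (a < n)%nat -> (b < n)%nat -> (c < n)%nat -> (d < n)%nat ->
  Rsum n (fun e => f_third e c a * f_third e d b) = f_third_pair n c a d b.
Proof.
  intros. unfold f_third_pair.
  rewrite (Rsum_ext n _ (fun e => kron e a * (2 * ind_le e c * f_third e d b)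
                                 + kron e c * (2 * ind_le c a * f_third e d b)
                                 + 2 * kron c a * (ind_le c e * f_third e d b))).
  2:{ intros e He. unfold f_third at 1. rewrite (kron_sym c e). ring. }
  rewrite !Rsum_plus, !Rsum_kron_l, Rsum_scal_l by auto.
  rewrite (Rsum_ext n _ (fun e => kron e b * (2 * ind_le c e * ind_le e d)
                                 + kron e d * (2 * ind_le c e * ind_le d b)
                                 + 2 * kron d b * (ind_le c e * ind_le d e))).
  2:{ intros e He. unfold f_third. rewrite (kron_sym d e). ring. }
  rewrite !Rsum_plus, !Rsum_kron_l, Rsum_scal_l, Rsum_ind_le_r2 by auto. ring.
Qed.

Lemma gauss_ric_dd_closed n a b c d : (a < n)%nat -> (b < n)%nat -> (c < n)%nat -> (d < n)%nat ->
  gauss_ric_dd n a b c d = (2 * INR a + 6) * f_third c d b + (2 * INR b + 6) * f_third c d a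
                           - f_third_pair n c a d b - f_third_pair n c b d a.
Proof.
  intros. unfold gauss_ric_dd.
  rewrite !Rsum_minus, !Rsum_plus, !Rsum_scal_r, !Rsum_f_third_diag, !Rsum_f_third_mul by auto. ring.
Qed.

Definition riem_rate (n i j k l : nat) : R :=
  lin_Riem (fun a b c d => -2 * gauss_ric_dd n a b c d) i j k l.

Ltac case_indices := repeat (match goal with
  | |- context [Nat.eqb ?x ?y] => destruct (Nat.eqb_spec x y)
  | |- context [Nat.leb ?x ?y] => destruct (Nat.leb_spec x y) end; try (exfalso; lia)).

Lemma riem_rate_ijij n i j : (i < j)%nat -> (j < n)%nat ->
  riem_rate n i j i j = -8 * (INR n - INR j + 1).
Proof.
  intros. unfold riem_rate, lin_Riem. rewrite !gauss_ric_dd_closed by lia.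
  unfold f_third_pair, count_ge2, f_third, ind_le, kron.
  case_indices; subst; try lra.
Qed.

Lemma riem_rate_off n i j k l : (i < n)%nat -> (j < n)%nat -> (k < n)%nat -> (l < n)%nat ->
  ~ ((i = k /\ j = l) \/ (i = l /\ j = k)) -> riem_rate n i j k l = 0.
Proof.
  intros Hi Hj Hk Hl Hne. unfold riem_rate, lin_Riem. rewrite !gauss_ric_dd_closed by lia.
  unfold f_third_pair, count_ge2, f_third, ind_le, kron.
  case_indices; subst; try lra; exfalso; apply Hne; auto.
Qed.

(** * The Ricci flow starting from the graph *)

Section RicciFlow.
Variables (n : nat) (T eps : R) (G : R -> (nat -> R) -> nat -> nat -> R).
Hypotheses (hT : 0 < T) (heps : 0 < eps) (HR : is_ricci_flow n (dom n T eps) G)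
  (Hinit : forall x, dom n T eps 0 x -> forall i j, (i < n)%nat -> (j < n)%nat ->
      G 0 x i j = graph_metric (f_ex n) x i j).
Notation D := (dom n T eps).

Let D0 : D 0 origin := dom_origin n T eps hT heps.

Lemma G_smooth i j : (i < n)%nat -> (j < n)%nat -> smooth_on n D (fun t x => G t x i j).
Proof. destruct HR as [H _]. auto. Qed.

Lemma G_flow t x i j : D t x -> (i < n)%nat -> (j < n)%nat ->
  has_pd D Dt (fun t x => G t x i j) t x (-2 * RicF n D G t x i j).
Proof. destruct HR as [_ [_ [_ H]]]. auto. Qed.

Lemma G_initial y i j : D 0 y -> (i < n)%nat -> (j < n)%nat -> G 0 y i j = graph_g n y i j.
Proof. intros. rewrite Hinit by auto. apply graph_metric_f_ex; auto. Qed.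

Lemma dgF_initial y a i j : D 0 y -> (a < n)%nat -> (i < n)%nat -> (j < n)%nat ->
  dgF D G 0 y a i j = graph_dg n y a i j.
Proof.
  intros Hy Ha Hi Hj. unfold dgF. apply (pd_eq n T eps); auto. simpl.
  apply deriv_within_ext with (fun s => graph_g n (upd y a s) i j).
  - rewrite upd_same; auto.
  - intros s Hs. symmetry. apply G_initial; auto.
  - apply deriv_within_of_derivable_pt_lim, derivable_pt_lim_graph_g; auto.
Qed.

Lemma ddgF_initial y a b i j : D 0 y -> (a < n)%nat -> (b < n)%nat -> (i < n)%nat -> (j < n)%nat ->
  ddgF D G 0 y a b i j = graph_ddg n y a b i j.
Proof.
  intros Hy Ha Hb Hi Hj. unfold ddgF. apply (pd_eq n T eps); auto. simpl.
  apply deriv_within_ext with (fun s => graph_dg n (upd y a s) b i j).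
  - rewrite upd_same; auto.
  - intros s Hs. symmetry. apply dgF_initial; auto.
  - apply deriv_within_of_derivable_pt_lim, derivable_pt_lim_graph_dg; auto.
Qed.

Lemma RicF_initial y j k : D 0 y -> (j < n)%nat -> (k < n)%nat ->
  RicF n D G 0 y j k = Ric n (minv n (graph_g n y)) (graph_dg n y) (graph_ddg n y) j k.
Proof.
  intros Hy Hj Hk. unfold RicF.
  rewrite (minv_ext n (G 0 y) (graph_g n y)) by (intros; apply G_initial; auto).
  apply Ric_ext; auto; intros; [apply dgF_initial | apply ddgF_initial]; auto.
Qed.

Lemma G_origin i j : (i < n)%nat -> (j < n)%nat -> G 0 origin i j = kron i j.
Proof. intros. rewrite G_initial by auto. apply graph_g_origin. Qed.

Lemma RmF_origin i j k l : (i < n)%nat -> (j < n)%nat -> (k < n)%nat -> (l < n)%nat ->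
  RmF n D G 0 origin i j k l = 0.
Proof.
  intros. unfold RmF.
  rewrite (Riem_scale n _ _ _ (dgF D G 0 origin) _ (ddgF D G 0 origin) 0); [ring| | |auto..];
    intros; rewrite ?dgF_initial, ?ddgF_initial, ?graph_dg_origin, ?graph_ddg_origin by auto; ring.
Qed.

Let gb r := 3 * INR n * r ^ 2.
Let hb r := (4 + 2 * INR n) * r.

Definition ric_error_const : R :=
  bound_Ric n (2 * (gb 1 * gb 1)) (2 * hb 1 * gb 1) (12 * gb 1 + 2 * (hb 1 * hb 1)).

Lemma bound_Ric_graph r :
  bound_Ric n (2 * (gb r * gb r)) (2 * hb r * gb r) (12 * gb r + 2 * (hb r * hb r))
  = ric_error_const * r ^ 6.
Proof. unfold ric_error_const, bound_Ric, bound_Rup, bound_dGam, bound_Gam, bound_dgi, gb, hb. ring. Qed.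

Lemma small_radius : exists r0, 0 < r0 /\ forall r, 0 <= r <= r0 ->
  INR n * (gb r * gb r) <= 1 / 2 /\ 2 * (gb r * gb r) <= 1.
Proof.
  set (c := 9 * INR n ^ 3 + 18 * INR n ^ 2).
  assert (Hc : 0 <= c) by (unfold c; apply Rplus_le_le_0_compat;
                            apply Rmult_le_pos; try lra; apply pow_le, pos_INR).
  pose proof (Rmin_l 1 (1 / (2 * c + 2))). pose proof (Rmin_r 1 (1 / (2 * c + 2))).
  set (r0 := Rmin 1 (1 / (2 * c + 2))) in *.
  assert (Hr0 : 0 < r0) by (apply Rmin_pos; [lra | apply Rdiv_lt_0_compat; lra]).
  exists r0. split; auto. intros r Hr.
  assert (Hr1 : r <= 1) by lra.
  assert (Hrc : c * r <= 1 / 2).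
  { apply Rle_trans with (c * (1 / (2 * c + 2))).
    - apply Rmult_le_compat_l; lra.
    - apply Rmult_le_reg_r with (2 * c + 2); [lra|]. unfold Rdiv. field_simplify; lra. }
  assert (Hr4 : r ^ 4 <= r).
  { replace (r ^ 4) with (r * (r * r * r)) by ring.
    assert (r * r * r <= 1) by (assert (r * r <= 1) by nra; nra). nra. }
  assert (Hc4 : c * r ^ 4 <= 1 / 2) by (apply Rle_trans with (c * r); [apply Rmult_le_compat_l|]; lra).
  pose proof (pos_INR n). pose proof (pow_le r 4 (proj1 Hr)).
  replace (gb r * gb r) with (9 * INR n ^ 2 * r ^ 4) by (unfold gb; ring).
  unfold c in Hc4. split; nra.
Qed.

Lemma RicF_initial_error y r j k : D 0 y -> 0 <= r -> (forall m, (m < n)%nat -> Rabs (y m) <= r) ->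
  INR n * (gb r * gb r) <= 1 / 2 -> 2 * (gb r * gb r) <= 1 -> (j < n)%nat -> (k < n)%nat ->
  Rabs (RicF n D G 0 y j k - gauss_ric n y j k) <= ric_error_const * r ^ 6.
Proof.
  intros Hy Hr Hyr H1 H2 Hj Hk.
  rewrite RicF_initial, <- Ric_flat_graph, <- bound_Ric_graph by auto.
  assert (Hgb : 0 <= gb r * gb r) by apply Rle_0_sqr.
  apply Rabs_Ric_sub_le; auto.
  - split; lra.
  - apply minv_near_identity; auto. apply graph_g_near_identity; auto.
  - intros. apply Rabs_graph_dg_le; auto.
  - intros. apply Rabs_graph_ddg_le; auto.
Qed.

(* The spatial Hessian of [d_t g = -2 Ric] at the origin is read off from that of
   [-2 gauss_ric], since the two differ by [O(|x|^6)]. *)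
Lemma hessian_ddt_G_origin a b c d : (a < n)%nat -> (b < n)%nat -> (c < n)%nat -> (d < n)%nat ->
  pd D (Dx a) (pd D (Dx b) (pd D Dt (fun t x => G t x c d))) 0 origin = -2 * gauss_ric_dd n a b c d.
Proof.
  intros Ha Hb Hc Hd.
  set (K := pd D Dt (fun t x => G t x c d)).
  assert (SK : smooth_on n D K) by exact (proj1 (smooth_on_pd n T eps _ Dt (G_smooth c d Hc Hd) I)).
  destruct small_radius as [r0 [Hr0 Hsmall]].
  set (C := ric_error_const).
  apply (second_difference_limit_approx (second_difference (fun u w => K 0 (plane_pt a b u w)))
           _ _ (2 * (4 * (Rabs C * 2 ^ 6))) (Rmin (r0 / 2) (eps / 4))); [apply Rmin_pos; lra| |].
  { apply second_difference_at_origin; auto. }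
  intros s [Hs Hsd]. pose proof (Rmin_l (r0 / 2) (eps / 4)). pose proof (Rmin_r (r0 / 2) (eps / 4)).
  assert (HD : forall u w, 0 <= u <= s -> 0 <= w <= s -> D 0 (plane_pt a b u w))
    by (intros; apply dom_plane_pt; auto; rewrite !Rabs_right; lra).
  assert (EK : forall u w, 0 <= u <= s -> 0 <= w <= s ->
             K 0 (plane_pt a b u w) = -2 * RicF n D G 0 (plane_pt a b u w) c d)
    by (intros; apply (pd_eq n T eps); [auto | exact I | apply G_flow; auto]).
  replace (second_difference (fun u w => K 0 (plane_pt a b u w)) s - s * s * (-2 * gauss_ric_dd n a b c d))
    with (-2 * second_difference (fun u w => RicF n D G 0 (plane_pt a b u w) c d
                                             - gauss_ric n (plane_pt a b u w) c d) s).
  2:{ replace (s * s * (-2 * gauss_ric_dd n a b c d)) with (-2 * (s * s * gauss_ric_dd n a b c d))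
        by ring.
      rewrite <- (second_difference_gauss_ric n a b c d s) by auto.
      unfold second_difference. rewrite !EK by lra. ring. }
  rewrite Rabs_mult, (Rabs_left (-2)) by lra.
  replace (2 * (4 * (Rabs C * 2 ^ 6)) * s ^ 6) with (- -2 * (4 * (Rabs C * (2 * s) ^ 6))) by ring.
  apply Rmult_le_compat_l; [lra|]. apply Rabs_second_difference_le; [|lra].
  intros u w Hu Hw. eapply Rle_trans.
  - apply (RicF_initial_error _ (2 * s)); [auto | lra | | apply Hsmall; lra
                                         | apply Hsmall; lra | auto | auto].
    intros m Hm. eapply Rle_trans; [apply Rabs_plane_pt_le | rewrite !Rabs_right; lra].
  - apply Rmult_le_compat_r; [apply pow_le; lra | apply Rle_abs].
Qed.

Lemma ddt_ddgF_origin a b c d : (a < n)%nat -> (b < n)%nat -> (c < n)%nat -> (d < n)%nat ->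
  has_pd D Dt (fun t x => ddgF D G t x a b c d) 0 origin (-2 * gauss_ric_dd n a b c d).
Proof.
  intros Ha Hb Hc Hd.
  set (Gcd := fun t x => G t x c d).
  pose proof (G_smooth c d Hc Hd) as SG. fold Gcd in SG.
  destruct (smooth_on_pd n T eps Gcd (Dx b) SG Hb) as [S1 _].
  destruct (smooth_on_pd n T eps _ (Dx a) S1 Ha) as [S2 _].
  destruct (smooth_on_pd n T eps _ Dt S2 I) as [_ H2].
  specialize (H2 0 origin D0).
  rewrite (schwarz n T eps hT _ 0 origin a S1 D0 Ha) in H2.
  rewrite (pd_ext n T eps (Dx a) (pd D Dt (pd D (Dx b) Gcd)) (pd D (Dx b) (pd D Dt Gcd)) 0 origin D0)
    in H2 by (intros; apply schwarz; auto).
  unfold Gcd in H2. rewrite hessian_ddt_G_origin in H2 by auto. exact H2.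
Qed.

Lemma ddt_dgF_origin a c d : (a < n)%nat -> (c < n)%nat -> (d < n)%nat ->
  has_pd D Dt (fun t x => dgF D G t x a c d) 0 origin
    (pd D Dt (pd D (Dx a) (fun t x => G t x c d)) 0 origin).
Proof.
  intros Ha Hc Hd.
  destruct (smooth_on_pd n T eps _ (Dx a) (G_smooth c d Hc Hd) Ha) as [S1 _].
  destruct (smooth_on_pd n T eps _ Dt S1 I) as [_ H2]. exact (H2 0 origin D0).
Qed.

Let Pt (t : R) : Prop := D t origin /\ t <> 0.

Lemma limit1_origin F : smooth_on n D F -> limit1_in (fun t => F t origin) Pt (F 0 origin) 0.
Proof.
  intros SF e He. destruct (smooth_on_cont n T eps F SF 0 origin D0 e He) as [d [Hd C]].
  exists d. split; auto. intros t [[Ht Hne] Hdt]. simpl in *. unfold R_dist in *.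
  apply C; auto. intros. rewrite Rminus_diag, Rabs_R0. auto.
Qed.

Lemma limit1_quotient_origin F l : has_pd D Dt F 0 origin l -> F 0 origin = 0 ->
  limit1_in (fun t => F t origin / t) Pt l 0.
Proof.
  intros H E. apply limit1_ext with (fun s => (F s origin - F 0 origin) / (s - 0)); [|exact H].
  intros t _. rewrite E, !Rminus_0_r. reflexivity.
Qed.

(* [Rm(t)] is [t] times a [Riem_split] in which the derivatives of [g(t)] are divided by [t];
   as [t -> 0] these tend to [d_t (d g)(0, p)] and [d_t (dd g)(0, p)], while [d g(t) -> 0]. *)
Lemma ddt_RmF_origin i j k l : (i < n)%nat -> (j < n)%nat -> (k < n)%nat -> (l < n)%nat ->
  has_pd D Dt (fun t x => RmF n D G t x i j k l) 0 origin (riem_rate n i j k l).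
Proof.
  intros Hi Hj Hk Hl. simpl. unfold deriv_within.
  apply limit1_ext with (fun t => Riem_split n (G t origin) (minv n (G t origin)) (dgF D G t origin)
      (fun a b c => dgF D G t origin a b c / t) (fun a b c d => ddgF D G t origin a b c d / t) i j k l).
  { intros t [Ht Hne]. rewrite RmF_origin by auto. unfold RmF.
    rewrite (Riem_scale n _ _ _ (fun a b c => dgF D G t origin a b c / t) _
               (fun a b c d => ddgF D G t origin a b c d / t) t) by (auto; intros; field; auto).
    field. auto. }
  unfold riem_rate. rewrite <- (Riem_split_flat n (fun a c d => pd D Dt (pd D (Dx a) (fun t x => G t x c d)) 0 origin))
    by auto.
  apply limit1_Riem_split; auto.
  - intros a b Ha Hb. rewrite <- G_origin by auto.
    apply (limit1_origin (fun t x => G t x a b)), G_smooth; auto.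
  - apply limit1_minv_identity. intros a b Ha Hb. rewrite <- G_origin by auto.
    apply (limit1_origin (fun t x => G t x a b)), G_smooth; auto.
  - intros a b c Ha Hb Hc.
    replace (zero3 a b c) with (dgF D G 0 origin a b c)
      by (rewrite dgF_initial, graph_dg_origin by auto; reflexivity).
    apply (limit1_origin (fun t x => dgF D G t x a b c)).
    exact (proj1 (smooth_on_pd n T eps _ (Dx a) (G_smooth b c Hb Hc) Ha)).
  - intros a b c Ha Hb Hc. apply (limit1_quotient_origin (fun t x => dgF D G t x a b c)).
    + apply ddt_dgF_origin; auto.
    + rewrite dgF_initial by auto. apply graph_dg_origin.
  - intros a b c d Ha Hb Hc Hd. apply (limit1_quotient_origin (fun t x => ddgF D G t x a b c d)).
    + apply ddt_ddgF_origin; auto.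
    + rewrite ddgF_initial by auto. apply graph_ddg_origin.
Qed.

End RicciFlow.

Theorem mainTheorem2 (n : nat) (hn : (2 <= n)%nat) (T eps : R) (hT : 0 < T) (heps : 0 < eps)
  (G : R -> (nat -> R) -> nat -> nat -> R) :
  is_ricci_flow n (dom n T eps) G ->
  (forall x, dom n T eps 0 x -> forall i j, (i < n)%nat -> (j < n)%nat ->
      G 0 x i j = graph_metric (f_ex n) x i j) ->
  (forall i j, (i < n)%nat -> (j < n)%nat -> G 0 origin i j = kron i j) /\
  (forall i j k l, (i < n)%nat -> (j < n)%nat -> (k < n)%nat -> (l < n)%nat ->
      RmF n (dom n T eps) G 0 origin i j k l = 0) /\
  (forall i j k l, (i < n)%nat -> (j < n)%nat -> (k < n)%nat -> (l < n)%nat ->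
      ~ ((i = k /\ j = l) \/ (i = l /\ j = k)) ->
      has_pd (dom n T eps) Dt (fun t x => RmF n (dom n T eps) G t x i j k l) 0 origin 0) /\
  (forall i j, (i < j)%nat -> (j < n)%nat ->
      has_pd (dom n T eps) Dt (fun t x => RmF n (dom n T eps) G t x i j i j) 0 origin
        (-8 * (INR n - INR j + 1)) /\ -8 * (INR n - INR j + 1) < 0) /\
  (exists i j k l, (i < n)%nat /\ (j < n)%nat /\ (k < n)%nat /\ (l < n)%nat /\
      pd (dom n T eps) Dt (fun t x => RmF n (dom n T eps) G t x i j k l) 0 origin <> 0).
Proof.
  intros HR Hinit.
  pose proof (ddt_RmF_origin n T eps G hT heps HR Hinit) as Hrate.
  split; [|split; [|split; [|split]]].
  - exact (G_origin n T eps G hT heps Hinit).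
  - exact (RmF_origin n T eps G hT heps Hinit).
  - intros i j k l Hi Hj Hk Hl Hne.
    rewrite <- (riem_rate_off n i j k l) at 2 by auto. auto.
  - intros i j Hij Hjn. split.
    + rewrite <- (riem_rate_ijij n i j) by auto. apply Hrate; lia.
    + assert (INR j < INR n) by (apply lt_INR; auto). lra.
  - exists 0%nat, 1%nat, 0%nat, 1%nat. repeat split; try lia.
    rewrite (pd_eq n T eps Dt _ 0 origin (riem_rate n 0 1 0 1));
      [| apply dom_origin; auto | exact I | apply Hrate; lia].
    rewrite riem_rate_ijij by lia.
    assert (2 <= INR n) by (replace 2 with (INR 2) by (simpl; ring); apply le_INR; auto).
    simpl INR. lra.
Qed.
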